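(* Under the standing assumptions, suppose $(D)$ has an optimal solution $p^*$ with $\|p^*\|\le R$ ($R>0$) and $D_f>0$. Let $(\epsilon_n)_{n\ge0}$ be a decreasing sequence of positive reals with $\epsilon_n\to0$. For each $n$, run the fast gradient method on $\theta_{\rho_n,\kappa_n}$ with $\rho_n=\frac{\epsilon_n}{3D_f}$, $\kappa_n=\frac{2\epsilon_n}{3R^2}$, and let $k(\epsilon_n)$ be an iteration index with $\theta(p_{k(\epsilon_n)})-\theta(p^* )\le\epsilon_n$ and $\|\nabla\theta_{\rho_n}(p_{k(\epsilon_n)})\|\le\frac{2\epsilon_n}{R}$. Set $\bar x_n:=x_{f,p_{k(\epsilon_n)}}\in\operatorname{dom} f$ and $\bar y_n:=x_{g,p_{k(\epsilon_n)}}\in\operatorname{dom} g$ (computed with parameter $\rho_n$). Then $(\bar x_n)$ has a weakly convergent subsequence, and every weak sequential cluster point $\bar x$ of $(\bar x_n)$ is an optimal solution of $(P)$, i.e. $\bar x\in\operatorname{dom} f$, $A\bar x\in\operatorname{dom} g$ and $f(\bar x)+g(A\bar x)=v(P)$.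
   Context: Standing assumptions: $\mathcal{H}$ is a real Hilbert space; $f:\mathcal{H}\to\mathbb{R}\cup\{+\infty\}$ is proper, convex, lower semicontinuous with bounded effective domain; $g:\mathbb{R}^m\to\mathbb{R}\cup\{+\infty\}$ is proper, lower semicontinuous and $\mu$-strongly convex for some $\mu>0$; $A:\mathcal{H}\to\mathbb{R}^m$ is linear and continuous with $A(\operatorname{dom} f)\cap\operatorname{dom} g\neq\emptyset$. $(P)$ is $\inf_{x\in\mathcal{H}}\{f(x)+g(Ax)\}$, $(D)$ is $\sup_{p}\{-f^*(A^*p)-g^*(-p)\}$. $D_f:=\sup\{\tfrac12\|x\|^2:x\in\operatorname{dom} f\}$. $\theta(p):=f^*(A^*p)+g^*(-p)$. For $\rho>0$, $f_\rho^*(q):=\sup_{x}\{\langle q,x\rangle-f(x)-\frac\rho2\|x\|^2\}$; $x_{f,p}$ is the unique maximizer in the definition of $f_\rho^*(A^*p)$; $x_{g,p}:=\nabla g^*(-p)$, the unique minimizer of $x\mapsto\langle p,x\rangle+g(x)$. $\theta_\rho(p):=f_\rho^*(A^*p)+g^*(-p)$, $\nabla\theta_\rho(p)=Ax_{f,p}-x_{g,p}$; $\theta_{\rho,\kappa}:=\theta_\rho+\frac\kappa2\|\cdot\|^2$; $L(\rho,\kappa):=\frac{\|A\|^2}{\rho}+\frac1\mu+\kappa$. Fast gradient method on $\theta_{\rho,\kappa}$: $w_0=p_0=0$, $p_{k+1}=w_k-\frac{1}{L(\rho,\kappa)}\nabla\theta_{\rho,\kappa}(w_k)$, $w_{k+1}=p_{k+1}+\frac{\sqrt{L(\rho,\kappa)}-\sqrt\kappa}{\sqrt{L(\rho,\kappa)}+\sqrt\kappa}(p_{k+1}-p_k)$.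 *)

From Stdlib Require Import Reals Classical ClassicalEpsilon FunctionalExtensionality.
From Stdlib Require Fin.
Open Scope R_scope.

Inductive Rbar : Type := Finite (r : R) | p_infty | m_infty.

Definition Rbar_le (x y : Rbar) : Prop :=
  match x, y with
  | m_infty, _ => True
  | _, p_infty => True
  | Finite a, Finite b => a <= b
  | _, _ => False
  end.

Definition Rbar_lt (x y : Rbar) : Prop :=
  match x, y with
  | m_infty, m_infty => False
  | m_infty, _ => True
  | Finite _, p_infty => True
  | Finite a, Finite b => a < b
  | _, _ => False
  end.

(* +oo absorbs (the case +oo + -oo never arises below) *)
Definition Rbar_plus (x y : Rbar) : Rbar :=
  match x, y with
  | Finite a, Finite b => Finite (a + b)
  | p_infty, _ | _, p_infty => p_infty
  | _, _ => m_infty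
  end.

Definition Rbar_opp (x : Rbar) : Rbar :=
  match x with Finite a => Finite (- a) | p_infty => m_infty | m_infty => p_infty end.

(* supremum of a set of reals in the extended reals (sup of empty set = -oo) *)
Definition Rbar_sup (E : R -> Prop) : Rbar :=
  match excluded_middle_informative (exists x, E x) with
  | left ne =>
      match excluded_middle_informative (bound E) with
      | left b => Finite (proj1_sig (completeness E b ne))
      | right _ => p_infty
      end
  | right _ => m_infty
  end.

Definition Rbar_inf (E : R -> Prop) : Rbar :=
  Rbar_opp (Rbar_sup (fun t => E (- t))).

Record Hilbert : Type := {
  hcar :> Type;
  hzero : hcar;
  hplus : hcar -> hcar -> hcar;
  hopp : hcar -> hcar;
  hscal : R -> hcar -> hcar;
  hinner : hcar -> hcar -> R;
  hplus_assoc : forall x y z, hplus x (hplus y z) = hplus (hplus x y) z;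
  hplus_comm : forall x y, hplus x y = hplus y x;
  hplus_zero_r : forall x, hplus x hzero = x;
  hplus_opp_r : forall x, hplus x (hopp x) = hzero;
  hscal_assoc : forall a b x, hscal a (hscal b x) = hscal (a * b) x;
  hscal_one : forall x, hscal 1 x = x;
  hscal_distr_l : forall a x y, hscal a (hplus x y) = hplus (hscal a x) (hscal a y);
  hscal_distr_r : forall a b x, hscal (a + b) x = hplus (hscal a x) (hscal b x);
  hinner_sym : forall x y, hinner x y = hinner y x;
  hinner_plus_l : forall x y z, hinner (hplus x y) z = hinner x z + hinner y z;
  hinner_scal_l : forall a x y, hinner (hscal a x) y = a * hinner x y;
  hinner_pos : forall x, 0 <= hinner x x;
  hinner_def : forall x, hinner x x = 0 -> x = hzero;
  hcomplete : forall u : nat -> hcar,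
    (forall eps, 0 < eps -> exists N, forall n k, (N <= n)%nat -> (N <= k)%nat ->
        sqrt (hinner (hplus (u n) (hopp (u k))) (hplus (u n) (hopp (u k)))) < eps) ->
    exists l, forall eps, 0 < eps -> exists N, forall n, (N <= n)%nat ->
        sqrt (hinner (hplus (u n) (hopp l)) (hplus (u n) (hopp l))) < eps
}.

Arguments hzero {h}.
Arguments hplus {h}.
Arguments hopp {h}.
Arguments hscal {h}.
Arguments hinner {h}.

Definition hminus {H : Hilbert} (x y : H) : H := hplus x (hopp y).
Definition hnorm {H : Hilbert} (x : H) : R := sqrt (hinner x x).

Definition weak_cv {H : Hilbert} (u : nat -> H) (x : H) : Prop :=
  forall y : H, Un_cv (fun n => hinner (u n) y) (hinner x y).

Definition RM (m : nat) : Type := Fin.t m -> R.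

Fixpoint fsum (m : nat) : (Fin.t m -> R) -> R :=
  match m return (Fin.t m -> R) -> R with
  | O => fun _ => 0
  | S k => fun v => v Fin.F1 + fsum k (fun i => v (Fin.FS i))
  end.

Definition rm_zero {m} : RM m := fun _ => 0.
Definition rm_plus {m} (x y : RM m) : RM m := fun i => x i + y i.
Definition rm_minus {m} (x y : RM m) : RM m := fun i => x i - y i.
Definition rm_opp {m} (x : RM m) : RM m := fun i => - x i.
Definition rm_scal {m} (a : R) (x : RM m) : RM m := fun i => a * x i.
Definition rm_inner {m} (x y : RM m) : R := fsum m (fun i => x i * y i).
Definition rm_norm {m} (x : RM m) : R := sqrt (rm_inner x x).

Section OnH.
Context {H : Hilbert}.

Definition domH (f : H -> Rbar) (x : H) : Prop := exists r, f x = Finite r.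

Definition properH (f : H -> Rbar) : Prop :=
  (forall x, f x <> m_infty) /\ exists x, domH f x.

Definition convexH (f : H -> Rbar) : Prop :=
  forall x y fx fy t, f x = Finite fx -> f y = Finite fy -> 0 <= t <= 1 ->
    Rbar_le (f (hplus (hscal t x) (hscal (1 - t) y))) (Finite (t * fx + (1 - t) * fy)).

Definition lscH (f : H -> Rbar) : Prop :=
  forall x c, Rbar_lt (Finite c) (f x) ->
    exists d, 0 < d /\ forall y, hnorm (hminus y x) < d -> Rbar_lt (Finite c) (f y).

Definition bounded_domH (f : H -> Rbar) : Prop :=
  exists M, forall x, domH f x -> hnorm x <= M.

End OnH.

Section OnRM.
Context {m : nat}.

Definition domRM (g : RM m -> Rbar) (y : RM m) : Prop := exists r, g y = Finite r.

Definition properRM (g : RM m -> Rbar) : Prop :=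
  (forall y, g y <> m_infty) /\ exists y, domRM g y.

Definition lscRM (g : RM m -> Rbar) : Prop :=
  forall y c, Rbar_lt (Finite c) (g y) ->
    exists d, 0 < d /\ forall z, rm_norm (rm_minus z y) < d -> Rbar_lt (Finite c) (g z).

Definition strongly_convexRM (mu : R) (g : RM m -> Rbar) : Prop :=
  forall x y gx gy t, g x = Finite gx -> g y = Finite gy -> 0 <= t <= 1 ->
    Rbar_le (g (rm_plus (rm_scal t x) (rm_scal (1 - t) y)))
            (Finite (t * gx + (1 - t) * gy
                     - mu / 2 * t * (1 - t) * (rm_norm (rm_minus x y)) ^ 2)).
End OnRM.

Definition linear_op {H : Hilbert} {m : nat} (A : H -> RM m) : Prop :=
  (forall x y, A (hplus x y) = rm_plus (A x) (A y)) /\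
  (forall a x, A (hscal a x) = rm_scal a (A x)).

Definition continuous_op {H : Hilbert} {m : nat} (A : H -> RM m) : Prop :=
  forall x eps, 0 < eps -> exists d, 0 < d /\
    forall y, hnorm (hminus y x) < d -> rm_norm (rm_minus (A y) (A x)) < eps.

Section Problem.
Context {H : Hilbert} {m : nat} (f : H -> Rbar) (g : RM m -> Rbar) (A : H -> RM m).

Definition valP : Rbar :=
  Rbar_inf (fun t => exists x fx gy,
    f x = Finite fx /\ g (A x) = Finite gy /\ t = fx + gy).

(* f^*(A^* p) = sup_x <A^* p, x> - f x, with <A^* p, x> = <p, A x> *)
Definition fconjA (p : RM m) : Rbar :=
  Rbar_sup (fun t => exists x fx, f x = Finite fx /\ t = rm_inner p (A x) - fx).

Definition gconj_neg (p : RM m) : Rbar :=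
  Rbar_sup (fun t => exists y gy, g y = Finite gy /\ t = rm_inner (rm_opp p) y - gy).

Definition theta (p : RM m) : Rbar := Rbar_plus (fconjA p) (gconj_neg p).

(* x_{f,p}: the maximizer in the definition of f_rho^*(A^* p) *)
Definition xf (rho : R) (p : RM m) : H :=
  epsilon (inhabits hzero) (fun x => exists fx, f x = Finite fx /\
    forall x' fx', f x' = Finite fx' ->
      rm_inner p (A x') - fx' - rho / 2 * (hnorm x') ^ 2
      <= rm_inner p (A x) - fx - rho / 2 * (hnorm x) ^ 2).

(* x_{g,p}: the minimizer of y |-> <p,y> + g y  ( = grad g^*(-p) ) *)
Definition xg (p : RM m) : RM m :=
  epsilon (inhabits rm_zero) (fun y => exists gy, g y = Finite gy /\
    forall y' gy', g y' = Finite gy' -> rm_inner p y + gy <= rm_inner p y' + gy').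

Definition grad_theta_rho (rho : R) (p : RM m) : RM m :=
  rm_minus (A (xf rho p)) (xg p).

(* fast gradient method on theta_{rho,kappa}; returns (p_k, w_k);
   nA stands for ||A||, mu for the strong convexity modulus *)
Definition Lrk (nA mu rho kappa : R) : R := nA ^ 2 / rho + 1 / mu + kappa.

Fixpoint fgm (nA mu rho kappa : R) (k : nat) : RM m * RM m :=
  match k with
  | O => (rm_zero, rm_zero)
  | S k' =>
      let (p, w) := fgm nA mu rho kappa k' in
      let L := Lrk nA mu rho kappa in
      let gradw := rm_plus (grad_theta_rho rho w) (rm_scal kappa w) in
      let p' := rm_minus w (rm_scal (1 / L) gradw) in
      let beta := (sqrt L - sqrt kappa) / (sqrt L + sqrt kappa) in
      (p', rm_plus p' (rm_scal beta (rm_minus p' p)))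
  end.

End Problem.

From Stdlib Require Import Reals Lra Lia Psatz Classical ClassicalEpsilon FunctionalExtensionality.
From Stdlib Require Fin.
Open Scope R_scope.

(** The dual iterate [p_n] returned for the tolerance [eps n] satisfies
    [|p_n|^2 = O(1/eps n)] (the potential of Nesterov's method, compared with the dual
    solution [p*]) and [|grad theta_rho p_n| <= 2 eps n / R].  Weak duality applied to
    the pair [(xbar_n, ybar_n) = (x_{f,p_n}, x_{g,p_n})] then shows that its objective
    [f xbar_n + g ybar_n] exceeds that of every feasible point by [O(sqrt (eps n))].
    Since [dom f] is bounded, [xbar_n] has weakly convergent subsequences; along such a
    subsequence [ybar_n - A xbar_n -> 0] and [A xbar_n -> A x] in norm (A has finite
    rank), and lower semicontinuity of [g] together with the weak closedness of the
    convex sublevel sets of [f] show that the limit [x] is optimal. *)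

Arguments hplus_assoc {h}.
Arguments hplus_comm {h}.
Arguments hplus_zero_r {h}.
Arguments hplus_opp_r {h}.
Arguments hinner_sym {h}.
Arguments hinner_plus_l {h}.
Arguments hinner_scal_l {h}.
Arguments hinner_pos {h}.
Arguments hinner_def {h}.
Arguments hcomplete {h}.

Ltac fld := field; repeat match goal with |- _ /\ _ => split | |- _ <> _ => intro | _ => lra end.

Lemma CV_const c : Un_cv (fun _ => c) c.
Proof. intros e He; exists O; intros; unfold Rdist; rewrite Rminus_diag, Rabs_R0; lra. Qed.

Lemma lim_le (a : nat -> R) l b : Un_cv a l -> (forall n, a n <= b) -> l <= b.
Proof. intros Ha Hb. eapply Rle_cv_lim; [exact Hb | exact Ha | apply CV_const]. Qed.

Lemma Rabs_le_inv x M : Rabs x <= M -> -M <= x <= M.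
Proof. intro Hx. pose proof (Rle_abs x). pose proof (Rle_abs (-x)). rewrite Rabs_Ropp in H0. lra. Qed.

Lemma inv_succ_small (e : R) : 0 < e -> exists N, forall n, (N <= n)%nat -> 1 / (INR n + 1) < e.
Proof.
  intro He. destruct (archimed_cor1 e He) as [N [HN1 HN2]]. exists N. intros n Hn.
  apply le_INR in Hn. pose proof (lt_0_INR N ltac:(lia)).
  apply Rle_lt_trans with (/ INR N); [|exact HN1].
  unfold Rdiv. rewrite Rmult_1_l. apply Rinv_le_contravar; lra.
Qed.

Lemma inv_succ_pos (n : nat) : 0 < 1 / (INR n + 1).
Proof. apply Rdiv_lt_0_compat; [lra|]. pose proof (pos_INR n); lra. Qed.

Section HilbertAlgebra.
Context {H : Hilbert}.

(** The squared norm [<x,x>], which is polynomial and thus easier to handle than [hnorm]. *)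
Definition sqnorm (x : H) : R := hinner x x.

Lemma hinner_plus_r (x y z : H) : hinner x (hplus y z) = hinner x y + hinner x z.
Proof. rewrite hinner_sym, hinner_plus_l, (hinner_sym y), (hinner_sym z); ring. Qed.

Lemma hinner_scal_r a (x y : H) : hinner x (hscal a y) = a * hinner x y.
Proof. rewrite hinner_sym, hinner_scal_l, hinner_sym; ring. Qed.

Lemma hscal_zero (x : H) : hscal 0 x = hzero.
Proof.
  assert (E : hplus (hscal 0 x) (hscal 0 x) = hscal 0 x).
  { rewrite <- hscal_distr_r. f_equal; ring. }
  set (s := hscal 0 x) in *.
  transitivity (hplus s (hplus s (hopp s))).
  - rewrite hplus_opp_r, hplus_zero_r. reflexivity.
  - rewrite hplus_assoc, E. apply hplus_opp_r.
Qed.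

Lemma hinner_zero_l (y : H) : hinner hzero y = 0.
Proof. rewrite <- (hscal_zero y), hinner_scal_l; ring. Qed.

Lemma hinner_zero_r (y : H) : hinner y hzero = 0.
Proof. rewrite hinner_sym; apply hinner_zero_l. Qed.

Lemma hinner_opp_l (x y : H) : hinner (hopp x) y = - hinner x y.
Proof.
  assert (E : hinner (hplus x (hopp x)) y = 0) by (rewrite hplus_opp_r; apply hinner_zero_l).
  rewrite hinner_plus_l in E; lra.
Qed.

Lemma hinner_opp_r (x y : H) : hinner y (hopp x) = - hinner y x.
Proof. rewrite hinner_sym, hinner_opp_l, hinner_sym; ring. Qed.

Lemma hinner_minus_l (x y z : H) : hinner (hminus x y) z = hinner x z - hinner y z.
Proof. unfold hminus; rewrite hinner_plus_l, hinner_opp_l; ring. Qed.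

Lemma hinner_minus_r (x y z : H) : hinner z (hminus x y) = hinner z x - hinner z y.
Proof. unfold hminus; rewrite hinner_plus_r, hinner_opp_r; ring. Qed.

Lemma heq_of_sqnorm_minus (x y : H) : sqnorm (hminus x y) = 0 -> x = y.
Proof.
  intro E. apply hinner_def in E. unfold hminus in E.
  transitivity (hplus x (hplus (hopp y) y)).
  - rewrite (hplus_comm (hopp y)), hplus_opp_r, hplus_zero_r. reflexivity.
  - rewrite hplus_assoc, E, hplus_comm, hplus_zero_r. reflexivity.
Qed.

End HilbertAlgebra.

Ltac hexp := unfold sqnorm, hminus in *;
  repeat rewrite ?hinner_plus_l, ?hinner_plus_r, ?hinner_scal_l, ?hinner_scal_r,
                 ?hinner_opp_l, ?hinner_opp_r.

Ltac hexp_in Hyp := unfold sqnorm, hminus in Hyp;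
  repeat rewrite ?hinner_plus_l, ?hinner_plus_r, ?hinner_scal_l, ?hinner_scal_r,
                 ?hinner_opp_l, ?hinner_opp_r in Hyp.

Section HilbertNorm.
Context {H : Hilbert}.

Lemma sqnorm_pos (x : H) : 0 <= sqnorm x.
Proof. apply hinner_pos. Qed.

Lemma hnorm_pos (x : H) : 0 <= hnorm x.
Proof. apply sqrt_pos. Qed.

Lemma hnorm_sq (x : H) : hnorm x * hnorm x = sqnorm x.
Proof. apply sqrt_sqrt, hinner_pos. Qed.

Lemma hnorm_pow2 (x : H) : hnorm x ^ 2 = sqnorm x.
Proof. rewrite <- hnorm_sq; ring. Qed.

Lemma hnorm_of_sqnorm (x : H) d : 0 <= d -> sqnorm x = d * d -> hnorm x = d.
Proof. intros Hd E. unfold hnorm. fold (sqnorm x). rewrite E. apply sqrt_square; auto. Qed.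

Lemma hnorm_le_of_sqnorm (x : H) b : 0 <= b -> sqnorm x <= b * b -> hnorm x <= b.
Proof.
  intros Hb Hx. unfold hnorm. rewrite <- (sqrt_square b) by lra. apply sqrt_le_1_alt. exact Hx.
Qed.

Lemma hnorm_zero_eq (x : H) : hnorm x = 0 -> x = hzero.
Proof. intro E. apply hinner_def. pose proof (hnorm_sq x). rewrite E in H0. unfold sqnorm in H0. lra. Qed.

Lemma heq_of_inner (x y : H) : (forall z, hinner x z = hinner y z) -> x = y.
Proof.
  intro E. apply heq_of_sqnorm_minus. unfold sqnorm. rewrite hinner_minus_l, E. ring.
Qed.

Lemma hopp_scal (x : H) : hopp x = hscal (-1) x.
Proof. apply heq_of_sqnorm_minus. hexp. ring. Qed.

Lemma sqnorm_minus (x y : H) : sqnorm (hminus x y) = sqnorm x - 2 * hinner x y + sqnorm y.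
Proof. hexp. rewrite (hinner_sym y x). ring. Qed.

Lemma sqnorm_scal a (x : H) : sqnorm (hscal a x) = a * a * sqnorm x.
Proof. hexp. ring. Qed.

Lemma sqnorm_convex (x y : H) t :
  sqnorm (hplus (hscal t x) (hscal (1 - t) y)) =
  t * sqnorm x + (1 - t) * sqnorm y - t * (1 - t) * sqnorm (hminus x y).
Proof. hexp. rewrite (hinner_sym y x). ring. Qed.

Lemma hnorm_scal a (x : H) : hnorm (hscal a x) = Rabs a * hnorm x.
Proof.
  unfold hnorm. fold (sqnorm (hscal a x)) (sqnorm x). rewrite sqnorm_scal.
  rewrite sqrt_mult_alt by (apply Rle_0_sqr). rewrite <- (sqrt_Rsqr_abs a). reflexivity.
Qed.

Lemma hnorm_minus_sym (x y : H) : hnorm (hminus x y) = hnorm (hminus y x).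
Proof. unfold hnorm. f_equal. hexp. rewrite (hinner_sym x y). ring. Qed.

Lemma cauchy_schwarz_sq (x y : H) : hinner x y * hinner x y <= sqnorm x * sqnorm y.
Proof.
  destruct (Req_dec (sqnorm y) 0) as [E|E].
  - apply hinner_def in E. subst y. rewrite hinner_zero_r.
    pose proof (sqnorm_pos x). unfold sqnorm at 2. rewrite hinner_zero_r. lra.
  - pose proof (sqnorm_pos y) as Py.
    (* expand [0 <= |x - t y|^2] at the optimal [t = <x,y>/|y|^2] *)
    set (t := hinner x y / sqnorm y).
    pose proof (sqnorm_pos (hplus x (hscal (- t) y))) as P.
    unfold sqnorm at 1 in P.
    rewrite hinner_plus_l, !hinner_plus_r, !hinner_scal_l, !hinner_scal_r, (hinner_sym y x) in P. fold (sqnorm x) (sqnorm y) in P. unfold t in P.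
    assert (sqnorm y > 0) by lra.
    assert (Q : 0 <= sqnorm x - hinner x y * hinner x y / sqnorm y).
    { replace (sqnorm x - hinner x y * hinner x y / sqnorm y) with
        (sqnorm x + - (hinner x y / sqnorm y) * hinner x y +
         (- (hinner x y / sqnorm y) * hinner x y
          + - (hinner x y / sqnorm y) * (- (hinner x y / sqnorm y) * sqnorm y))) by fld.
      exact P. }
    apply Rmult_le_compat_r with (r := sqnorm y) in Q; [|lra].
    replace ((sqnorm x - hinner x y * hinner x y / sqnorm y) * sqnorm y) with
      (sqnorm x * sqnorm y - hinner x y * hinner x y) in Q by fld. lra.
Qed.

Lemma cauchy_schwarz (x y : H) : Rabs (hinner x y) <= hnorm x * hnorm y.
Proof.
  rewrite <- sqrt_Rsqr_abs. unfold hnorm. rewrite <- sqrt_mult by apply hinner_pos.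
  apply sqrt_le_1_alt. unfold Rsqr. apply cauchy_schwarz_sq.
Qed.

Lemma cauchy_schwarz_le (x y : H) : hinner x y <= hnorm x * hnorm y.
Proof. pose proof (cauchy_schwarz x y). pose proof (Rle_abs (hinner x y)). lra. Qed.

Lemma hnorm_triangle (x y : H) : hnorm (hplus x y) <= hnorm x + hnorm y.
Proof.
  apply hnorm_le_of_sqnorm. pose proof (hnorm_pos x); pose proof (hnorm_pos y); lra.
  hexp. rewrite (hinner_sym y x).
  pose proof (cauchy_schwarz_le x y). pose proof (hnorm_sq x). pose proof (hnorm_sq y).
  unfold sqnorm in *. nra.
Qed.

End HilbertNorm.

Section StrongConvergence.
Context {H : Hilbert}.

Definition strong_cv (u : nat -> H) (x : H) : Prop :=
  forall eps, 0 < eps -> exists N, forall n, (N <= n)%nat -> hnorm (hminus (u n) x) < eps.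

Lemma strong_cv_shift (u : nat -> H) x N : strong_cv u x -> strong_cv (fun n => u (n + N)%nat) x.
Proof. intros Hu e He. destruct (Hu e He) as [M HM]. exists M. intros n Hn. apply HM. lia. Qed.

Lemma weak_cv_shift (u : nat -> H) x N : weak_cv u x -> weak_cv (fun n => u (n + N)%nat) x.
Proof. intros Hw y e He. destruct (Hw y e He) as [M HM]. exists M. intros n Hn. apply HM. lia. Qed.

Lemma strong_cv_inner (u : nat -> H) x a :
  strong_cv u x -> Un_cv (fun n => hinner (u n) a) (hinner x a).
Proof.
  intros Hu eps Heps.
  destruct (Hu (eps / (hnorm a + 1))) as [N HN].
  { apply Rdiv_lt_0_compat; [lra|]. pose proof (hnorm_pos a); lra. }
  exists N. intros n Hn. unfold Rdist. specialize (HN n Hn).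
  rewrite <- hinner_minus_l. eapply Rle_lt_trans; [apply cauchy_schwarz|].
  pose proof (hnorm_pos a). pose proof (hnorm_pos (hminus (u n) x)).
  apply Rlt_le_trans with (eps / (hnorm a + 1) * (hnorm a + 1)); [|right; fld].
  apply Rle_lt_trans with (hnorm (hminus (u n) x) * (hnorm a + 1)); [nra|].
  apply Rmult_lt_compat_r; lra.
Qed.

Lemma strong_cv_sqnorm (u : nat -> H) x :
  strong_cv u x -> Un_cv (fun n => sqnorm (u n)) (sqnorm x).
Proof.
  intros Hu.
  assert (Hdist : Un_cv (fun n => sqnorm (hminus (u n) x)) 0).
  { intros eps Heps. destruct (Hu (sqrt eps)) as [N HN]; [apply sqrt_lt_R0; lra|].
    exists N. intros n Hn. specialize (HN n Hn). unfold Rdist.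
    rewrite Rminus_0_r, Rabs_right by (apply Rle_ge, sqnorm_pos).
    rewrite <- hnorm_sq. pose proof (hnorm_pos (hminus (u n) x)).
    rewrite <- (sqrt_sqrt eps) by lra. apply Rmult_le_0_lt_compat; lra. }
  (* |u_n|^2 = |u_n - x|^2 + 2 <u_n, x> - |x|^2 *)
  assert (Hsum : Un_cv (fun n => sqnorm (hminus (u n) x) + 2 * hinner (u n) x - sqnorm x)
                       (0 + 2 * hinner x x - sqnorm x)).
  { apply CV_minus; [apply CV_plus|apply CV_const]; [exact Hdist|].
    apply (CV_mult (fun _ => 2)); [apply CV_const|apply strong_cv_inner; exact Hu]. }
  replace (0 + 2 * hinner x x - sqnorm x) with (sqnorm x) in Hsum by (unfold sqnorm; ring).
  eapply Un_cv_ext; [|exact Hsum]. intro n. cbv beta. rewrite sqnorm_minus. ring.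
Qed.

End StrongConvergence.

Section Minimization.
Context {H : Hilbert}.

(** [F] is [c]-strongly convex on the convex set [D] (with modulus [2c] in the usual
    normalisation). *)
Definition strongly_convex_on (D : H -> Prop) (F : H -> R) (c : R) :=
  forall x y t, D x -> D y -> 0 <= t <= 1 ->
    D (hplus (hscal t x) (hscal (1-t) y)) /\
    F (hplus (hscal t x) (hscal (1-t) y)) <= t * F x + (1-t) * F y - c * t * (1-t) * sqnorm (hminus x y).

(** The sublevel sets of [F] on [D] are sequentially (strongly) closed: this is lower
    semicontinuity of [F] extended by [+oo] outside [D]. *)
Definition closed_sublevels (D : H -> Prop) (F : H -> R) :=
  forall u x a, (forall n, D (u n)) -> strong_cv u x -> (forall n, F (u n) <= a) -> D x /\ F x <= a.

Lemma sqnorm_convex_minus (a b : H) t :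
  sqnorm (hminus (hplus (hscal t a) (hscal (1-t) b)) b) = t * t * sqnorm (hminus a b).
Proof. hexp. rewrite (hinner_sym b a). ring. Qed.

Lemma closed_sublevels_local_bound D F y0 : closed_sublevels D F -> D y0 ->
  exists del, 0 < del /\ forall y, D y -> hnorm (hminus y y0) < del -> F y0 - 1 < F y.
Proof.
  intros HS Hy0. apply NNPP. intro Hn.
  assert (Hbad : forall n : nat, exists y,
             D y /\ hnorm (hminus y y0) < 1 / (INR n + 1) /\ F y <= F y0 - 1).
  { intro n. apply NNPP. intro Hc. apply Hn. exists (1 / (INR n + 1)). split; [apply inv_succ_pos|].
    intros y Hy Hyn. apply Rnot_le_lt. intro Hle. apply Hc. exists y. auto. }
  apply choice in Hbad. destruct Hbad as [u Hu].
  assert (Hc : strong_cv u y0).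
  { intros e He. destruct (inv_succ_small e He) as [N HN]. exists N. intros n Hn0.
    specialize (Hu n). specialize (HN n Hn0). lra. }
  destruct (HS u y0 (F y0 - 1) (fun n => proj1 (Hu n)) Hc (fun n => proj2 (proj2 (Hu n)))). lra.
Qed.

(** A strongly convex function with closed sublevels is bounded below: far from [y0]
    the quadratic term dominates the local lower bound transported along segments. *)
Lemma strongly_convex_lower_bound D F c : 0 < c -> strongly_convex_on D F c ->
  closed_sublevels D F -> (exists x, D x) -> exists b, forall y, D y -> b <= F y.
Proof.
  intros Hc HSC HS [y0 Hy0].
  destruct (closed_sublevels_local_bound D F y0 HS Hy0) as [del [Hdel Hnb]].
  exists (F y0 - 1 - 2 / (c * del * del)). intros y Hy.
  assert (P2 : 0 < 2 / (c * del * del)) by (apply Rdiv_lt_0_compat; [lra| apply Rmult_lt_0_compat; nra]).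
  set (d := hnorm (hminus y y0)).
  destruct (Rlt_or_le d del) as [Hlt|Hge]; [specialize (Hnb y Hy Hlt); lra|].
  (* the point at distance [del/2] from [y0] on the segment towards [y] *)
  set (t := del / (2 * d)).
  assert (Ht : 0 < t <= 1/2).
  { unfold t. split; [apply Rdiv_lt_0_compat; lra|].
    apply Rmult_le_reg_r with (2 * d); [lra|]. unfold Rdiv. field_simplify; lra. }
  destruct (HSC y y0 t Hy Hy0 ltac:(lra)) as [HDz HFz].
  assert (Hz : hnorm (hminus (hplus (hscal t y) (hscal (1 - t) y0)) y0) = del / 2).
  { apply hnorm_of_sqnorm; [lra|]. rewrite sqnorm_convex_minus, <- hnorm_sq. fold d. unfold t. fld. }
  specialize (Hnb _ HDz ltac:(lra)).
  rewrite <- hnorm_sq in HFz. fold d in HFz.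
  assert (K : F y0 - 2 * d / del + c * (1 - t) * (d * d) <= F y).
  { replace (2 * d / del) with (1 / t) by (unfold t; fld).
    apply Rmult_le_reg_l with t; [lra|].
    replace (t * (F y0 - 1 / t + c * (1 - t) * (d * d)))
      with (t * F y0 - 1 + c * t * (1 - t) * (d * d)) by fld. lra. }
  (* complete the square in [d] *)
  assert (Q : 0 <= c / 2 * ((d - 2 / (c * del)) * (d - 2 / (c * del))))
    by (apply Rmult_le_pos; [lra|apply Rle_0_sqr]).
  replace (c / 2 * ((d - 2 / (c * del)) * (d - 2 / (c * del))))
    with (c/2 * d * d - 2 * d / del + 2 / (c * del * del)) in Q by fld.
  assert (c / 2 * d * d <= c * (1 - t) * (d * d)).
  { assert (0 <= c * (1/2 - t) * (d * d)) by (apply Rmult_le_pos; [apply Rmult_le_pos|]; nra). lra. }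
  lra.
Qed.

Lemma approximate_minimizers D F : (exists x, D x) -> (exists b, forall y, D y -> b <= F y) ->
  exists v (u : nat -> H), (forall y, D y -> v <= F y) /\
    forall n, D (u n) /\ F (u n) <= v + 1 / (INR n + 1).
Proof.
  intros [x0 Hx0] [b Hb].
  set (E := fun s => exists x, D x /\ s = - F x).
  assert (Eb : bound E) by (exists (- b); intros s [x [Hx ->]]; specialize (Hb x Hx); lra).
  destruct (completeness E Eb (ex_intro _ (- F x0) (ex_intro _ x0 (conj Hx0 eq_refl))))
    as [s0 [Hub Hlub]].
  assert (Happrox : forall n : nat, exists x, D x /\ F x <= - s0 + 1 / (INR n + 1)).
  { intro n. apply NNPP. intro Hn. pose proof (inv_succ_pos n).
    assert (is_upper_bound E (s0 - 1 / (INR n + 1))).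
    { intros s [x [Hx ->]]. apply Rnot_lt_le. intro Hlt. apply Hn. exists x. split; auto. lra. }
    specialize (Hlub _ H1). lra. }
  apply choice in Happrox. destruct Happrox as [u Hu].
  exists (- s0), u. split; auto.
  intros y Hy. assert (E (- F y)) by (exists y; auto). specialize (Hub _ H0). lra.
Qed.

(** Two [a]- and [b]-approximate minimizers of a [c]-strongly convex function are at
    squared distance at most [4 (a + b) / c] (evaluate at their midpoint). *)
Lemma approximate_minimizers_close D F c v x y a b : 0 < c -> strongly_convex_on D F c ->
  (forall z, D z -> v <= F z) -> D x -> D y -> F x <= v + a -> F y <= v + b ->
  sqnorm (hminus x y) <= 4 / c * (a + b).
Proof.
  intros Hc HSC Hv Hx Hy Fx Fy.
  destruct (HSC x y (1/2) Hx Hy ltac:(lra)) as [Dm Fm].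
  specialize (Hv _ Dm). pose proof (sqnorm_pos (hminus x y)).
  apply Rmult_le_reg_l with (c / 4); [lra|].
  replace (c / 4 * (4 / c * (a + b))) with (a + b) by fld. nra.
Qed.

(** Existence of a minimizer of a strongly convex function with closed sublevels: the
    approximate minimizers form a Cauchy sequence and its limit is a minimizer. *)
Lemma strongly_convex_min_exists D F c : 0 < c -> strongly_convex_on D F c ->
  closed_sublevels D F -> (exists x, D x) ->
  exists x, D x /\ forall y, D y -> F x <= F y.
Proof.
  intros Hc HSC HS Hne.
  destruct (approximate_minimizers D F Hne (strongly_convex_lower_bound D F c Hc HSC HS Hne))
    as [v [u [Hv Hu]]].
  destruct (hcomplete u) as [x Hx].
  { intros e He. destruct (inv_succ_small (c * e * e / 8)) as [N HN].
    { apply Rdiv_lt_0_compat; [apply Rmult_lt_0_compat; nra|lra]. }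
    exists N. intros n k Hn Hk. fold (hminus (u n) (u k)) (hnorm (hminus (u n) (u k))).
    pose proof (HN n Hn). pose proof (HN k Hk).
    pose proof (approximate_minimizers_close D F c v (u n) (u k) _ _ Hc HSC Hv
                  (proj1 (Hu n)) (proj1 (Hu k)) (proj2 (Hu n)) (proj2 (Hu k))) as Hd.
    assert (sqnorm (hminus (u n) (u k)) < e * e).
    { eapply Rle_lt_trans; [exact Hd|].
      apply Rlt_le_trans with (4 / c * (c * e * e / 8 + c * e * e / 8)); [|right; fld].
      apply Rmult_lt_compat_l; [apply Rdiv_lt_0_compat|]; lra. }
    pose proof (hnorm_pos (hminus (u n) (u k))). rewrite <- hnorm_sq in H2. nra. }
  (* each tail of [u] has values below [v + 1/(N+1)], hence so does the limit *)
  assert (HxN : forall N : nat, D x /\ F x <= v + 1 / (INR N + 1)).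
  { intro N. apply (HS (fun n => u (n + N)%nat)).
    - intro n. apply (Hu (n + N)%nat).
    - apply strong_cv_shift; exact Hx.
    - intro n. destruct (Hu (n + N)%nat) as [_ Fu]. eapply Rle_trans; [exact Fu|].
      apply Rplus_le_compat_l. unfold Rdiv. rewrite !Rmult_1_l. apply Rinv_le_contravar.
      pose proof (pos_INR N); lra. rewrite plus_INR. pose proof (pos_INR n); lra. }
  exists x. split; [apply (HxN O)|].
  intros y Hy. specialize (Hv y Hy).
  apply Rnot_lt_le. intro Hlt.
  destruct (inv_succ_small (F x - v)) as [N HN]; [lra|].
  destruct (HxN N) as [_ HF]. specialize (HN N (le_n N)). lra.
Qed.

Lemma strongly_convex_min_growth D F c (xs : H) : 0 < c -> strongly_convex_on D F c -> D xs ->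
  (forall y, D y -> F xs <= F y) ->
  forall y, D y -> F xs + c * sqnorm (hminus y xs) <= F y.
Proof.
  intros Hc HSC Hxs Hmin y Hy.
  assert (Hall : forall t, 0 < t <= 1 -> F xs <= F y - c * (1 - t) * sqnorm (hminus y xs)).
  { intros t Ht. destruct (HSC y xs t Hy Hxs ltac:(lra)) as [Dz Fz]. specialize (Hmin _ Dz).
    apply Rmult_le_reg_l with t; [lra|]. nra. }
  pose proof (sqnorm_pos (hminus y xs)). set (N := sqnorm (hminus y xs)) in *.
  apply Rnot_lt_le. intro Hlt. set (del := F xs + c * N - F y).
  assert (HN : 0 < N).
  { destruct (Req_dec N 0) as [E0|E0]; [|lra]. rewrite E0 in Hlt. specialize (Hall 1 ltac:(lra)). lra. }
  (* let [t -> 0] in [Hall] *)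
  set (t := Rmin 1 (del / (2 * c * N))).
  assert (0 < del / (2 * c * N)) by (apply Rdiv_lt_0_compat; [unfold del; lra| nra]).
  assert (Ht : 0 < t <= 1) by (unfold t; split; [apply Rmin_glb_lt; lra| apply Rmin_l]).
  specialize (Hall t Ht). assert (t <= del / (2 * c * N)) by apply Rmin_r.
  assert (c * t * N <= del / 2).
  { replace (del / 2) with (c * (del / (2 * c * N)) * N) by fld.
    apply Rmult_le_compat_r; [lra|]. apply Rmult_le_compat_l; lra. }
  unfold del in *. nra.
Qed.

End Minimization.

Section Projection.
Context {H : Hilbert}.

Definition convex_subset (C : H -> Prop) :=
  forall x y t, C x -> C y -> 0 <= t <= 1 -> C (hplus (hscal t x) (hscal (1-t) y)).

Definition closed_subset (C : H -> Prop) :=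
  forall u x, (forall n, C (u n)) -> strong_cv u x -> C x.

Lemma sqnorm_dist_convex (z x y : H) t :
  sqnorm (hminus z (hplus (hscal t x) (hscal (1 - t) y))) =
  t * sqnorm (hminus z x) + (1 - t) * sqnorm (hminus z y) - 1 * t * (1 - t) * sqnorm (hminus x y).
Proof. hexp. rewrite (hinner_sym x z), (hinner_sym y z), (hinner_sym y x). ring. Qed.

(** Every nonempty closed convex set contains a point nearest to [z]: the squared
    distance to [z] is strongly convex. *)
Lemma nearest_point_exists (C : H -> Prop) (z : H) : convex_subset C -> closed_subset C -> (exists x, C x) ->
  exists P, C P /\ forall c, C c -> sqnorm (hminus z P) <= sqnorm (hminus z c).
Proof.
  intros Hcv Hcl Hne.
  apply (strongly_convex_min_exists C (fun c => sqnorm (hminus z c)) 1); auto; [lra| |].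
  - intros x y t Hx Hy Ht. split; [apply Hcv; auto|]. rewrite sqnorm_dist_convex. lra.
  - intros u x a Hu Hx Ha. split; [apply (Hcl u x Hu Hx)|].
    apply (lim_le (fun n => sqnorm (hminus z (u n)))); auto.
    assert (E : forall w, sqnorm (hminus z w) = sqnorm z - 2 * hinner w z + sqnorm w).
    { intro w. rewrite sqnorm_minus, (hinner_sym z w). ring. }
    rewrite E. apply (Un_cv_ext (fun n => sqnorm z - 2 * hinner (u n) z + sqnorm (u n))).
    { intro n. rewrite E. reflexivity. }
    apply CV_plus; [apply CV_minus; [apply CV_const|]|apply strong_cv_sqnorm; auto].
    apply (CV_mult (fun _ => 2)); [apply CV_const|apply strong_cv_inner; auto].
Qed.

Lemma nearest_point_variational (C : H -> Prop) (z P : H) : convex_subset C -> C P ->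
  (forall c, C c -> sqnorm (hminus z P) <= sqnorm (hminus z c)) ->
  forall c, C c -> hinner (hminus z P) (hminus c P) <= 0.
Proof.
  intros Hcv HP Hmin c Hc.
  (* moving from [P] towards [c] by [t] cannot decrease the distance *)
  assert (Hall : forall t, 0 < t <= 1 -> hinner (hminus z P) (hminus c P) <= t / 2 * sqnorm (hminus c P)).
  { intros t Ht. specialize (Hmin _ (Hcv c P t Hc HP ltac:(lra))).
    assert (E : sqnorm (hminus z (hplus (hscal t c) (hscal (1 - t) P))) =
                sqnorm (hminus z P) - 2 * t * hinner (hminus z P) (hminus c P) + t * t * sqnorm (hminus c P)).
    { hexp. rewrite (hinner_sym c z), (hinner_sym P z), (hinner_sym P c). ring. }
    rewrite E in Hmin. apply Rmult_le_reg_l with (2 * t); [lra|]. nra. }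
  apply Rnot_lt_le. intro Hlt. set (v := hinner (hminus z P) (hminus c P)) in *.
  pose proof (sqnorm_pos (hminus c P)). set (w := sqnorm (hminus c P)) in *.
  destruct (Req_dec w 0) as [Hw|Hw]; [specialize (Hall 1 ltac:(lra)); rewrite Hw in Hall; lra|].
  set (t := Rmin 1 (v / w)).
  assert (0 < v / w) by (apply Rdiv_lt_0_compat; lra).
  assert (Ht : 0 < t <= 1) by (unfold t; split; [apply Rmin_glb_lt; lra| apply Rmin_l]).
  specialize (Hall t Ht). assert (t <= v / w) by apply Rmin_r.
  assert (t * w <= v).
  { apply Rmult_le_reg_r with (/ w); [apply Rinv_0_lt_compat; lra|].
    rewrite Rmult_assoc, Rinv_r by lra. unfold Rdiv in *. lra. }
  nra.
Qed.

Lemma projection_exists (C : H -> Prop) (z : H) : convex_subset C -> closed_subset C -> (exists x, C x) ->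
  exists P, C P /\ forall c, C c -> hinner (hminus z P) (hminus c P) <= 0.
Proof.
  intros Hcv Hcl Hne. destruct (nearest_point_exists C z Hcv Hcl Hne) as [P [HP Hmin]].
  exists P. split; auto. apply nearest_point_variational; auto.
Qed.

(** Mazur: closed convex sets are weakly sequentially closed (separate the weak limit
    from its projection). *)
Lemma convex_closed_weak_closed (C : H -> Prop) (u : nat -> H) x : convex_subset C -> closed_subset C ->
  (forall n, C (u n)) -> weak_cv u x -> C x.
Proof.
  intros Hcv Hcl Hu Hw.
  destruct (projection_exists C x Hcv Hcl (ex_intro _ (u O) (Hu O))) as [P [HP Hv]].
  assert (L : Un_cv (fun n => hinner (u n) (hminus x P) - hinner P (hminus x P))
                    (hinner x (hminus x P) - hinner P (hminus x P))).
  { apply CV_minus; [apply Hw|apply CV_const]. }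
  assert (Le : hinner x (hminus x P) - hinner P (hminus x P) <= 0).
  { apply (lim_le _ _ _ L). intro n. specialize (Hv (u n) (Hu n)).
    rewrite hinner_sym, hinner_minus_l in Hv. lra. }
  rewrite <- hinner_minus_l in Le. fold (sqnorm (hminus x P)) in Le.
  pose proof (sqnorm_pos (hminus x P)).
  assert (x = P) by (apply heq_of_sqnorm_minus; lra). subst; auto.
Qed.

Definition linear_subspace (S : H -> Prop) :=
  S hzero /\ (forall x y, S x -> S y -> S (hplus x y)) /\ (forall a x, S x -> S (hscal a x)).

Lemma orthogonal_projection (S : H -> Prop) z : linear_subspace S -> closed_subset S ->
  exists P, S P /\ forall s, S s -> hinner (hminus z P) s = 0.
Proof.
  intros HS Hcl. destruct HS as [S0 [Sp Ss]].
  assert (Hcv : convex_subset S) by (intros x y t Hx Hy _; apply Sp; apply Ss; auto).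
  destruct (projection_exists S z Hcv Hcl (ex_intro _ hzero S0)) as [P [HP Hv]].
  exists P. split; auto. intros s Hs.
  pose proof (Hv (hplus P s) (Sp _ _ HP Hs)) as V1.
  pose proof (Hv (hplus P (hscal (-1) s)) (Sp _ _ HP (Ss _ _ Hs))) as V2.
  assert (E1 : hinner (hminus z P) (hminus (hplus P s) P) = hinner (hminus z P) s) by (hexp; ring).
  assert (E2 : hinner (hminus z P) (hminus (hplus P (hscal (-1) s)) P) = - hinner (hminus z P) s)
    by (hexp; ring).
  rewrite E1 in V1. rewrite E2 in V2. lra.
Qed.

Definition linear_functional (l : H -> R) :=
  (forall x y, l (hplus x y) = l x + l y) /\ (forall a x, l (hscal a x) = a * l x).

Lemma bounded_kernel_closed (l : H -> R) M : linear_functional l ->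
  (forall x, Rabs (l x) <= M * hnorm x) -> closed_subset (fun y => l y = 0).
Proof.
  intros [Lp Ls] Hb u x Hu Hx. apply NNPP. intro Hne.
  assert (Hlt : 0 < Rabs (l x)) by (apply Rabs_pos_lt; auto).
  assert (HM : 0 < M + 1).
  { pose proof (Hb x). pose proof (hnorm_pos x). destruct (Rle_or_lt 0 M); [lra|].
    assert (M * hnorm x <= 0) by nra. lra. }
  destruct (Hx (Rabs (l x) / (M + 1))) as [N HN]; [apply Rdiv_lt_0_compat; lra|].
  specialize (HN N (le_n N)). pose proof (Hb (hminus (u N) x)) as Hbn.
  assert (Lm : l (hminus (u N) x) = - l x) by (unfold hminus; rewrite Lp, hopp_scal, Ls, (Hu N); ring).
  rewrite Lm, Rabs_Ropp in Hbn.
  pose proof (hnorm_pos (hminus (u N) x)).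
  apply Rmult_lt_compat_l with (r := M + 1) in HN; [|lra].
  replace ((M + 1) * (Rabs (l x) / (M + 1))) with (Rabs (l x)) in HN by (field; lra). nra.
Qed.

(** Riesz representation of bounded linear functionals: write [H] as the kernel plus
    the line spanned by a vector orthogonal to it. *)
Lemma riesz_representation (l : H -> R) M : linear_functional l ->
  (forall x, Rabs (l x) <= M * hnorm x) -> exists a, forall y, l y = hinner a y.
Proof.
  intros Hl Hb. pose proof Hl as [Lp Ls].
  assert (L0 : l hzero = 0) by (rewrite <- (hscal_zero hzero), Ls; ring).
  assert (Lm : forall x y, l (hminus x y) = l x - l y) by (intros x y; unfold hminus; rewrite Lp, hopp_scal, Ls; ring).
  destruct (classic (forall y, l y = 0)) as [Z|NZ].
  { exists hzero. intro y. rewrite Z, hinner_zero_l. reflexivity. }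
  apply not_all_ex_not in NZ. destruct NZ as [z0 Hz0].
  set (z := hscal (1 / l z0) z0).
  assert (Lz : l z = 1) by (unfold z; rewrite Ls; field; auto).
  set (K := fun y => l y = 0).
  assert (SK : linear_subspace K).
  { split; [exact L0|split]; intros; unfold K in *; [rewrite Lp| rewrite Ls]; nra. }
  destruct (orthogonal_projection K z SK (bounded_kernel_closed l M Hl Hb)) as [P [HP Ho]].
  set (u := hminus z P).
  assert (Lu : l u = 1) by (unfold u; rewrite Lm, Lz; unfold K in HP; rewrite HP; ring).
  assert (Nu : sqnorm u <> 0) by (intro E; apply hinner_def in E; rewrite E, L0 in Lu; lra).
  exists (hscal (1 / sqnorm u) u). intro y.
  assert (Hk : K (hminus y (hscal (l y) u))) by (unfold K; rewrite Lm, Ls, Lu; ring).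
  specialize (Ho _ Hk). fold u in Ho. rewrite hinner_minus_r, hinner_scal_r in Ho.
  rewrite hinner_scal_l. fold (sqnorm u) in Ho. rewrite (hinner_sym u y) in Ho |- *.
  apply Rmult_eq_reg_r with (sqnorm u); auto. field_simplify; auto. lra.
Qed.

End Projection.

Definition strictly_increasing (s : nat -> nat) := forall j, (s j < s (S j))%nat.

Lemma strictly_increasing_lt s : strictly_increasing s -> forall a b, (a < b)%nat -> (s a < s b)%nat.
Proof. intros Hs a b Hab. induction Hab; [apply Hs|]. specialize (Hs m). lia. Qed.

Lemma strictly_increasing_ge s : strictly_increasing s -> forall j, (j <= s j)%nat.
Proof. intros Hs j. induction j; [lia|]. specialize (Hs j). lia. Qed.

Lemma strictly_increasing_comp s t :
  strictly_increasing s -> strictly_increasing t -> strictly_increasing (fun n => s (t n)).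
Proof. intros Hs Ht j. apply strictly_increasing_lt; auto. Qed.

Lemma bounded_convergent_subsequence (s : nat -> R) M : (forall n, Rabs (s n) <= M) ->
  exists sig, strictly_increasing sig /\ exists l, Un_cv (fun j => s (sig j)) l.
Proof.
  intros Hb.
  destruct (Bolzano_Weierstrass s (fun c => -M <= c <= M) (compact_P3 (-M) M)) as [l Hl].
  { intro n. specialize (Hb n). apply Rabs_le_inv in Hb. lra. }
  (* [l] is a cluster value: beyond every [N] some term is [1/(j+1)]-close to it *)
  assert (Hn : forall N j : nat, exists p, (N <= p)%nat /\ Rabs (s p - l) < 1 / (INR j + 1)).
  { intros N j. pose proof (inv_succ_pos j) as Pj.
    destruct (Hl (fun y => Rabs (y - l) < 1 / (INR j + 1)) N) as [p [Hp Vp]].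
    { exists (mkposreal _ Pj). intros y Hy. exact Hy. }
    exists p; auto. }
  destruct (choice (fun (Nj : nat * nat) p => (fst Nj <= p)%nat /\ Rabs (s p - l) < 1 / (INR (snd Nj) + 1)))
    as [nx Hnx]; [intros [N j]; apply Hn|].
  set (sig := fix sg (j : nat) : nat :=
         match j with O => nx (O, O) | S j' => nx (S (sg j'), S j') end).
  assert (Hsig : forall j, Rabs (s (sig j) - l) < 1 / (INR j + 1)) by (intro j; destruct j; apply Hnx).
  exists sig. split.
  - intro j. destruct (Hnx (S (sig j), S j)). simpl in *. lia.
  - exists l. intros e He. destruct (inv_succ_small e He) as [N HN]. exists N. intros n Hn'.
    unfold Rdist. specialize (HN n Hn'). specialize (Hsig n). lra.
Qed.

Definition convergent_extraction_spec (s : nat -> R) (sig : nat -> nat) :=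
  strictly_increasing sig /\
  ((exists M, forall n, Rabs (s n) <= M) -> exists l, Un_cv (fun j => s (sig j)) l).

Definition convergent_extraction (s : nat -> R) : nat -> nat :=
  epsilon (inhabits (fun n => n)) (convergent_extraction_spec s).

Lemma convergent_extraction_correct s : convergent_extraction_spec s (convergent_extraction s).
Proof.
  unfold convergent_extraction. apply epsilon_spec.
  destruct (classic (exists M, forall n, Rabs (s n) <= M)) as [[M HM]|NB].
  - destruct (bounded_convergent_subsequence s M HM) as [sig [H1 H2]]. exists sig. split; auto.
  - exists (fun n => n). split; [intro; lia|]. intro; contradiction.
Qed.

Section DiagonalExtraction.
Variable x : nat -> nat -> R.
Hypothesis x_bounded : forall i, exists M, forall n, Rabs (x i n) <= M.

(** [nested i] makes [x 0], ..., [x (i-1)] converge. *)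
Fixpoint nested (i : nat) : nat -> nat :=
  match i with
  | O => fun n => n
  | S i' => fun n => nested i' (convergent_extraction (fun k => x i' (nested i' k)) n)
  end.

Lemma nested_increasing i : strictly_increasing (nested i).
Proof.
  induction i; [intro; simpl; lia|].
  simpl. apply (strictly_increasing_comp (nested i) _ IHi). apply convergent_extraction_correct.
Qed.

Lemma nested_refines i k : (i <= k)%nat ->
  exists om, (forall j, (j <= om j)%nat) /\ forall n, nested k n = nested i (om n).
Proof.
  intro Hik. induction Hik; [exists (fun n => n); split; auto|].
  destruct IHHik as [om [Hom Hp]].
  set (c := convergent_extraction (fun k => x m (nested m k))).
  exists (fun n => om (c n)). split.
  - intro j. pose proof (strictly_increasing_ge _ (proj1 (convergent_extraction_correct
      (fun k => x m (nested m k)))) j). specialize (Hom (c j)). fold c in H. lia.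
  - intro n. simpl. apply Hp.
Qed.

Definition diagonal (j : nat) : nat := nested (S j) j.

Lemma diagonal_increasing : strictly_increasing diagonal.
Proof.
  intro j. unfold diagonal.
  change (nested (S (S j)) (S j)) with
    (nested (S j) (convergent_extraction (fun k => x (S j) (nested (S j) k)) (S j))).
  apply strictly_increasing_lt; [apply nested_increasing|].
  pose proof (strictly_increasing_ge _ (proj1 (convergent_extraction_correct
    (fun k => x (S j) (nested (S j) k)))) (S j)). lia.
Qed.

Lemma diagonal_cv i : exists l, Un_cv (fun j => x i (diagonal j)) l.
Proof.
  destruct (proj2 (convergent_extraction_correct (fun k => x i (nested i k)))) as [l Hl].
  { destruct (x_bounded i) as [M HM]. exists M. intro; apply HM. }
  exists l. intros e He. destruct (Hl e He) as [N HN]. exists (N + S i)%nat. intros j Hj.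
  destruct (nested_refines (S i) (S j) ltac:(lia)) as [om [Hom Hp]].
  unfold diagonal. rewrite Hp. simpl. apply HN. specialize (Hom j). lia.
Qed.

End DiagonalExtraction.

Section WeakLimits.
Context {H : Hilbert}.
Variable b : nat -> H.
Variable M : R.
Hypothesis b_bounded : forall j, hnorm (b j) <= M.

Definition testing_vectors (y : H) : Prop := exists l, Un_cv (fun j => hinner (b j) y) l.

Lemma testing_vectors_subspace : linear_subspace testing_vectors.
Proof.
  split; [|split].
  - exists 0. apply (Un_cv_ext (fun _ => 0)); [intro; rewrite hinner_zero_r; auto|apply CV_const].
  - intros y z [l1 H1] [l2 H2]. exists (l1 + l2).
    apply (Un_cv_ext (fun j => hinner (b j) y + hinner (b j) z)); [intro; rewrite hinner_plus_r; auto|].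
    apply CV_plus; auto.
  - intros c y [l1 H1]. exists (c * l1). apply (Un_cv_ext (fun j => c * hinner (b j) y)).
    intro; rewrite hinner_scal_r; auto. apply (CV_mult (fun _ => c)); auto. apply CV_const.
Qed.

Lemma testing_uniform_bound j y y' : Rabs (hinner (b j) y - hinner (b j) y') <= M * hnorm (hminus y' y).
Proof.
  rewrite <- hinner_minus_r. eapply Rle_trans; [apply cauchy_schwarz|].
  rewrite hnorm_minus_sym. apply Rmult_le_compat_r; [apply hnorm_pos|apply b_bounded].
Qed.

(** By the uniform bound, the sequences [<b j, y>] with [y] near a testing vector are
    Cauchy. *)
Lemma testing_vectors_closed : closed_subset testing_vectors.
Proof.
  assert (HM : 0 <= M) by (pose proof (b_bounded O); pose proof (hnorm_pos (b O)); lra).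
  intros u y Hu Hy.
  destruct (R_complete (fun j => hinner (b j) y)) as [l Hl]; [|exists l; auto].
  intros e He.
  destruct (Hy (e / (4 * M + 1))) as [n0 Hn0]; [apply Rdiv_lt_0_compat; lra|].
  specialize (Hn0 n0 (le_n _)). destruct (Hu n0) as [l0 Hl0].
  destruct (Hl0 (e / 4)) as [N HN]; [lra|]. exists N. intros j k Hj Hk.
  pose proof (HN j Hj) as A1. pose proof (HN k Hk) as A2. unfold Rdist in *.
  pose proof (testing_uniform_bound j y (u n0)) as B1.
  pose proof (testing_uniform_bound k y (u n0)) as B2.
  assert (B3 : M * hnorm (hminus (u n0) y) <= e / 4).
  { apply Rle_trans with (M * (e / (4 * M + 1))); [apply Rmult_le_compat_l; lra|].
    apply Rmult_le_reg_r with (4 * M + 1); [lra|]. unfold Rdiv. field_simplify; lra. }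
  apply Rabs_def2 in A1. apply Rabs_def2 in A2. apply Rabs_le_inv in B1. apply Rabs_le_inv in B2.
  apply Rabs_def1; lra.
Qed.

(** If [<b j, b i>] converges for every [i], then [<b j, y>] converges for every [y]:
    project [y] onto the closed span of the [b i]. *)
Lemma testing_vectors_all : (forall i, testing_vectors (b i)) -> forall y, testing_vectors y.
Proof.
  intros Hb y.
  destruct (orthogonal_projection testing_vectors y testing_vectors_subspace testing_vectors_closed)
    as [P [[l Hl] Ho]].
  exists l. apply (Un_cv_ext (fun j => hinner (b j) P)); auto.
  intro j. specialize (Ho (b j) (Hb _)). rewrite hinner_sym, hinner_minus_r in Ho. lra.
Qed.

(** Pointwise convergence of a bounded sequence of inner products defines a bounded
    linear functional, represented by the weak limit (Riesz). *)
Lemma weak_limit_of_pointwise : (forall y, testing_vectors y) -> exists x, weak_cv b x.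
Proof.
  intros Hall.
  set (ell := fun y => epsilon (inhabits 0) (fun l => Un_cv (fun j => hinner (b j) y) l)).
  assert (Hell : forall y, Un_cv (fun j => hinner (b j) y) (ell y))
    by (intro y; unfold ell; apply epsilon_spec, Hall).
  assert (Lin : linear_functional ell).
  { split.
    - intros y z. apply (UL_sequence (fun j => hinner (b j) (hplus y z))); auto.
      apply (Un_cv_ext (fun j => hinner (b j) y + hinner (b j) z)); [intro; rewrite hinner_plus_r; auto|].
      apply CV_plus; auto.
    - intros c y. apply (UL_sequence (fun j => hinner (b j) (hscal c y))); auto.
      apply (Un_cv_ext (fun j => c * hinner (b j) y)); [intro; rewrite hinner_scal_r; auto|].
      apply (CV_mult (fun _ => c)); auto. apply CV_const. }
  assert (Bd : forall y, Rabs (ell y) <= M * hnorm y).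
  { intro y. apply (lim_le (fun j => Rabs (hinner (b j) y))); [apply cv_cvabs, Hell|].
    intro j. eapply Rle_trans; [apply cauchy_schwarz|].
    apply Rmult_le_compat_r; [apply hnorm_pos|apply b_bounded]. }
  destruct (riesz_representation ell M Lin Bd) as [xl Hx].
  exists xl. intro y. rewrite <- Hx. apply Hell.
Qed.

End WeakLimits.

Lemma bounded_weak_subsequence {H : Hilbert} (a : nat -> H) M : (forall n, hnorm (a n) <= M) ->
  exists ph x, strictly_increasing ph /\ weak_cv (fun j => a (ph j)) x.
Proof.
  intros Hb.
  assert (HM : 0 <= M) by (specialize (Hb O); pose proof (hnorm_pos (a O)); lra).
  set (x := fun i n => hinner (a n) (a i)).
  assert (xb : forall i, exists M, forall n, Rabs (x i n) <= M).
  { intro i. exists (M * M). intro n. unfold x. eapply Rle_trans; [apply cauchy_schwarz|].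
    apply Rmult_le_compat; auto using hnorm_pos. }
  set (b := fun j => a (diagonal x j)).
  destruct (weak_limit_of_pointwise b M (fun j => Hb _)) as [xl Hxl].
  - apply (testing_vectors_all b M (fun j => Hb _)).
    intro i. destruct (diagonal_cv x xb (diagonal x i)) as [l Hl]. exists l. exact Hl.
  - exists (diagonal x), xl. split; [apply diagonal_increasing|exact Hxl].
Qed.

Lemma fsum_ext m (u v : Fin.t m -> R) : (forall i, u i = v i) -> fsum m u = fsum m v.
Proof. intro E. replace u with v; auto. apply functional_extensionality; intro; auto. Qed.

Lemma fsum_plus m (u v : Fin.t m -> R) : fsum m (fun i => u i + v i) = fsum m u + fsum m v.
Proof. induction m; simpl; [ring|]. rewrite (IHm (fun i => u (Fin.FS i)) (fun i => v (Fin.FS i))). ring. Qed.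

Lemma fsum_scal m c (u : Fin.t m -> R) : fsum m (fun i => c * u i) = c * fsum m u.
Proof. induction m; simpl; [ring|]. rewrite (IHm (fun i => u (Fin.FS i))). ring. Qed.

Lemma fsum_nonneg m (u : Fin.t m -> R) : (forall i, 0 <= u i) -> 0 <= fsum m u.
Proof.
  induction m; simpl; intro Hu; [lra|].
  pose proof (Hu Fin.F1). pose proof (IHm (fun i => u (Fin.FS i)) (fun i => Hu _)). lra.
Qed.

Lemma fsum_ge_term m (u : Fin.t m -> R) i : (forall i, 0 <= u i) -> u i <= fsum m u.
Proof.
  induction m; intro Hu; [inversion i|].
  simpl. apply (Fin.caseS' i (fun i => u i <= u Fin.F1 + fsum m (fun i0 => u (Fin.FS i0)))).
  - pose proof (fsum_nonneg m (fun i => u (Fin.FS i)) (fun i => Hu _)). lra.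
  - intro p. pose proof (IHm (fun i => u (Fin.FS i)) p (fun i => Hu _)). pose proof (Hu Fin.F1).
    simpl in *. lra.
Qed.

Lemma fsum_cv0 m (h : Fin.t m -> nat -> R) :
  (forall i, Un_cv (h i) 0) -> Un_cv (fun n => fsum m (fun i => h i n)) 0.
Proof.
  induction m; intro Hh; simpl; [apply CV_const|].
  replace 0 with (0 + 0) by ring. apply CV_plus; [apply Hh|].
  apply (IHm (fun i => h (Fin.FS i))). intro; apply Hh.
Qed.

Section EuclideanSpace.
Variable m : nat.

Lemma rm_plus_assoc (x y z : RM m) : rm_plus x (rm_plus y z) = rm_plus (rm_plus x y) z.
Proof. apply functional_extensionality; intro; unfold rm_plus; ring. Qed.
Lemma rm_plus_comm (x y : RM m) : rm_plus x y = rm_plus y x.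
Proof. apply functional_extensionality; intro; unfold rm_plus; ring. Qed.
Lemma rm_plus_zero_r (x : RM m) : rm_plus x rm_zero = x.
Proof. apply functional_extensionality; intro; unfold rm_plus, rm_zero; ring. Qed.
Lemma rm_plus_opp_r (x : RM m) : rm_plus x (rm_opp x) = rm_zero.
Proof. apply functional_extensionality; intro; unfold rm_plus, rm_opp, rm_zero; ring. Qed.
Lemma rm_scal_assoc a b (x : RM m) : rm_scal a (rm_scal b x) = rm_scal (a * b) x.
Proof. apply functional_extensionality; intro; unfold rm_scal; ring. Qed.
Lemma rm_scal_one (x : RM m) : rm_scal 1 x = x.
Proof. apply functional_extensionality; intro; unfold rm_scal; ring. Qed.
Lemma rm_scal_distr_l a (x y : RM m) : rm_scal a (rm_plus x y) = rm_plus (rm_scal a x) (rm_scal a y).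
Proof. apply functional_extensionality; intro; unfold rm_scal, rm_plus; ring. Qed.
Lemma rm_scal_distr_r a b (x : RM m) : rm_scal (a + b) x = rm_plus (rm_scal a x) (rm_scal b x).
Proof. apply functional_extensionality; intro; unfold rm_scal, rm_plus; ring. Qed.
Lemma rm_inner_sym (x y : RM m) : rm_inner x y = rm_inner y x.
Proof. unfold rm_inner. apply fsum_ext; intro; ring. Qed.
Lemma rm_inner_plus_l (x y z : RM m) : rm_inner (rm_plus x y) z = rm_inner x z + rm_inner y z.
Proof. unfold rm_inner, rm_plus. rewrite <- fsum_plus. apply fsum_ext; intro; ring. Qed.
Lemma rm_inner_scal_l a (x y : RM m) : rm_inner (rm_scal a x) y = a * rm_inner x y.
Proof. unfold rm_inner, rm_scal. rewrite <- fsum_scal. apply fsum_ext; intro; ring. Qed.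
Lemma rm_inner_pos (x : RM m) : 0 <= rm_inner x x.
Proof. apply fsum_nonneg. intro; apply Rle_0_sqr. Qed.

Lemma rm_comp_sq (x : RM m) i : x i * x i <= rm_inner x x.
Proof. apply (fsum_ge_term m (fun i => x i * x i)). intro; apply Rle_0_sqr. Qed.

Lemma rm_inner_def (x : RM m) : rm_inner x x = 0 -> x = rm_zero.
Proof.
  intro E. apply functional_extensionality; intro i. unfold rm_zero.
  pose proof (rm_comp_sq x i). pose proof (Rle_0_sqr (x i)). unfold Rsqr in *. nra.
Qed.

Lemma rm_comp_le (x : RM m) i : Rabs (x i) <= sqrt (rm_inner x x).
Proof. rewrite <- sqrt_Rsqr_abs. apply sqrt_le_1_alt. apply rm_comp_sq. Qed.

Lemma rm_cv_of_components (u : nat -> RM m) (x : RM m) :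
  (forall i, Un_cv (fun n => u n i) (x i)) ->
  forall eps, 0 < eps -> exists N, forall n, (N <= n)%nat ->
    sqrt (rm_inner (rm_plus (u n) (rm_opp x)) (rm_plus (u n) (rm_opp x))) < eps.
Proof.
  intros Hc.
  assert (C0 : Un_cv (fun n => rm_inner (rm_plus (u n) (rm_opp x)) (rm_plus (u n) (rm_opp x))) 0).
  { apply (fsum_cv0 m (fun i n => (u n i + - x i) * (u n i + - x i))). intro i.
    replace 0 with ((x i + - x i) * (x i + - x i)) by ring.
    apply CV_mult; apply CV_plus; auto; apply CV_const. }
  intros e He. destruct (C0 (e * e)) as [N HN]; [nra|]. exists N. intros n Hn. specialize (HN n Hn).
  unfold Rdist in HN. rewrite Rminus_0_r in HN. apply Rabs_def2 in HN.
  rewrite <- (sqrt_square e) by lra. apply sqrt_lt_1_alt. split; [apply rm_inner_pos|lra].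
Qed.

Lemma rm_complete : forall u : nat -> RM m,
    (forall eps, 0 < eps -> exists N, forall n k, (N <= n)%nat -> (N <= k)%nat ->
        sqrt (rm_inner (rm_plus (u n) (rm_opp (u k))) (rm_plus (u n) (rm_opp (u k)))) < eps) ->
    exists l, forall eps, 0 < eps -> exists N, forall n, (N <= n)%nat ->
        sqrt (rm_inner (rm_plus (u n) (rm_opp l)) (rm_plus (u n) (rm_opp l))) < eps.
Proof.
  intros u Hu.
  assert (Hc : forall i, Cauchy_crit (fun n => u n i)).
  { intros i e He. destruct (Hu e He) as [N HN]. exists N. intros n k Hn Hk. unfold Rdist.
    eapply Rle_lt_trans; [|apply (HN n k Hn Hk)].
    apply (rm_comp_le (rm_plus (u n) (rm_opp (u k))) i). }
  exists (fun i => proj1_sig (R_complete _ (Hc i))).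
  apply rm_cv_of_components. intro i. exact (proj2_sig (R_complete _ (Hc i))).
Qed.

Definition RMH : Hilbert := {|
  hcar := RM m; hzero := rm_zero; hplus := rm_plus; hopp := rm_opp; hscal := rm_scal;
  hinner := rm_inner;
  hplus_assoc := rm_plus_assoc; hplus_comm := rm_plus_comm; hplus_zero_r := rm_plus_zero_r;
  hplus_opp_r := rm_plus_opp_r; hscal_assoc := rm_scal_assoc; hscal_one := rm_scal_one;
  hscal_distr_l := rm_scal_distr_l; hscal_distr_r := rm_scal_distr_r;
  hinner_sym := rm_inner_sym; hinner_plus_l := rm_inner_plus_l; hinner_scal_l := rm_inner_scal_l;
  hinner_pos := rm_inner_pos; hinner_def := rm_inner_def; hcomplete := rm_complete |}.

Lemma rm_inner_plus_r (x y z : RM m) : rm_inner x (rm_plus y z) = rm_inner x y + rm_inner x z.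
Proof. exact (hinner_plus_r (H := RMH) x y z). Qed.
Lemma rm_inner_scal_r a (x y : RM m) : rm_inner x (rm_scal a y) = a * rm_inner x y.
Proof. exact (hinner_scal_r (H := RMH) a x y). Qed.
Lemma rm_inner_minus_l (x y z : RM m) : rm_inner (rm_minus x y) z = rm_inner x z - rm_inner y z.
Proof. exact (hinner_minus_l (H := RMH) x y z). Qed.
Lemma rm_inner_minus_r (x y z : RM m) : rm_inner z (rm_minus x y) = rm_inner z x - rm_inner z y.
Proof. exact (hinner_minus_r (H := RMH) x y z). Qed.
Lemma rm_inner_zero_l (x : RM m) : rm_inner rm_zero x = 0.
Proof. exact (hinner_zero_l (H := RMH) x). Qed.
Lemma rm_inner_opp_l (x y : RM m) : rm_inner (rm_opp x) y = - rm_inner x y.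
Proof. exact (hinner_opp_l (H := RMH) x y). Qed.
Lemma rm_cauchy_schwarz (x y : RM m) : rm_inner x y <= rm_norm x * rm_norm y.
Proof. exact (cauchy_schwarz_le (H := RMH) x y). Qed.
Lemma rm_norm_sq (x : RM m) : rm_norm x * rm_norm x = rm_inner x x.
Proof. exact (hnorm_sq (H := RMH) x). Qed.
Lemma rm_norm_pos (x : RM m) : 0 <= rm_norm x.
Proof. apply sqrt_pos. Qed.

End EuclideanSpace.

(** The real part of an extended real ([0] at infinity), used on points of a domain. *)
Definition Rbar_fin (r : Rbar) : R := match r with Finite x => x | _ => 0 end.

Lemma Rbar_sup_ub E s t : Rbar_sup E = Finite s -> E t -> t <= s.
Proof.
  unfold Rbar_sup. destruct (excluded_middle_informative (exists x, E x)) as [ne|ne]; [|discriminate].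
  destruct (excluded_middle_informative (bound E)) as [b|b]; [|discriminate].
  destruct (completeness E b ne) as [s0 [Hub Hlub]]. simpl. intros Hs Ht. inversion Hs; subst. apply Hub; auto.
Qed.

Lemma Rbar_sup_le E b : (forall t, E t -> t <= b) -> Rbar_le (Rbar_sup E) (Finite b).
Proof.
  intro Hb. unfold Rbar_sup. destruct (excluded_middle_informative (exists x, E x)) as [ne|ne]; [|simpl; auto].
  destruct (excluded_middle_informative (bound E)) as [bd|bd].
  - destruct (completeness E bd ne) as [s0 [Hub Hlub]]. simpl. apply Hlub. intros t Ht; apply Hb; auto.
  - exfalso. apply bd. exists b. intros t Ht; apply Hb; auto.
Qed.

Lemma Rbar_sup_ge E t : E t -> Rbar_le (Finite t) (Rbar_sup E).
Proof.
  intro Ht. unfold Rbar_sup. destruct (excluded_middle_informative (exists x, E x)) as [ne|ne].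
  - destruct (excluded_middle_informative (bound E)) as [bd|bd]; simpl; auto.
    destruct (completeness E bd ne) as [s0 [Hub Hlub]]. simpl. apply Hub; auto.
  - exfalso; apply ne; exists t; auto.
Qed.

Lemma Rbar_sup_attained E e : E e -> (forall t, E t -> t <= e) -> Rbar_sup E = Finite e.
Proof.
  intros He Hb. unfold Rbar_sup. destruct (excluded_middle_informative (exists x, E x)) as [ne|ne].
  - destruct (excluded_middle_informative (bound E)) as [bd|bd].
    + destruct (completeness E bd ne) as [s0 [Hub Hlub]]. simpl. f_equal.
      apply Rle_antisym; [apply Hlub; intros t Ht; apply Hb; auto|apply Hub; auto].
    + exfalso. apply bd. exists e. intros t Ht; apply Hb; auto.
  - exfalso; apply ne; exists e; auto.
Qed.

Lemma Rbar_inf_attained E e : E e -> (forall t, E t -> e <= t) -> Rbar_inf E = Finite e.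
Proof.
  intros He Hb. unfold Rbar_inf. rewrite (Rbar_sup_attained _ (- e)).
  - simpl. f_equal. ring.
  - rewrite Ropp_involutive. auto.
  - intros t Ht. specialize (Hb _ Ht). lra.
Qed.

Lemma Rbar_le_finite_r a b : a <> m_infty -> Rbar_le a (Finite b) -> exists r, a = Finite r /\ r <= b.
Proof. intros Ha Hle. destruct a; simpl in *; try contradiction; eauto. Qed.

Lemma Rbar_plus_le a b x y :
  Rbar_le a (Finite x) -> Rbar_le b (Finite y) -> Rbar_le (Rbar_plus a b) (Finite (x + y)).
Proof. destruct a, b; simpl; intros; try contradiction; auto. lra. Qed.

Lemma Rbar_plus_ge a b x y :
  Rbar_le (Finite x) a -> Rbar_le (Finite y) b -> Rbar_le (Finite (x + y)) (Rbar_plus a b).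
Proof. destruct a, b; simpl; intros; try contradiction; auto. lra. Qed.

Lemma Rbar_le_finite_trans x y a : Rbar_le (Finite x) a -> y <= x -> Rbar_le (Finite y) a.
Proof. destruct a; simpl; auto. lra. Qed.

Section LowerSemicontinuity.
Context {H : Hilbert}.

Lemma lsc_below_limit (h : H -> Rbar) (u : nat -> H) x (r s : nat -> R) sl c :
  lscH h -> strong_cv u x -> (forall n, h (u n) = Finite (r n)) -> (forall n, r n <= s n) ->
  Un_cv s sl -> Rbar_lt (Finite c) (h x) -> c <= sl.
Proof.
  intros Hl Hu Hr Hrs Hs Hc. apply Rnot_lt_le. intro Hlt.
  destruct (Hl x c Hc) as [d [Hd Hnb]].
  destruct (Hu d Hd) as [N1 HN1]. destruct (Hs (c - sl)) as [N2 HN2]; [lra|].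
  specialize (Hnb (u (N1 + N2)%nat) (HN1 (N1 + N2)%nat ltac:(lia))). rewrite Hr in Hnb. simpl in Hnb.
  specialize (HN2 (N1 + N2)%nat ltac:(lia)). specialize (Hrs (N1 + N2)%nat).
  unfold Rdist in HN2. apply Rabs_def2 in HN2. lra.
Qed.

Lemma lsc_limit_le (h : H -> Rbar) (u : nat -> H) x (r s : nat -> R) sl :
  lscH h -> (forall y, h y <> m_infty) -> strong_cv u x ->
  (forall n, h (u n) = Finite (r n)) -> (forall n, r n <= s n) -> Un_cv s sl ->
  exists rx, h x = Finite rx /\ rx <= sl.
Proof.
  intros Hl Hp Hu Hr Hrs Hs.
  pose proof (lsc_below_limit h u x r s sl) as Hb.
  destruct (h x) as [rx| |] eqn:E.
  - exists rx. split; auto. apply Rnot_lt_le. intro Hlt.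
    assert ((rx + sl) / 2 <= sl) by (apply Hb; auto; simpl; lra). lra.
  - assert (sl + 1 <= sl) by (apply Hb; auto; simpl; auto). lra.
  - exfalso. apply (Hp x E).
Qed.

End LowerSemicontinuity.

(** With [q = sqrt (kap / L)] and the estimate points
    [v_k = ((1+q) w_k - p_k) / q], the potential
    [phi p_k - phi z + kap/2 |v_k - z|^2] contracts by the factor [1 - q] at each step.
    We only need the consequence that it stays bounded by its initial value. *)
Section FastGradient.
Context {H : Hilbert}.
Variable phi : H -> R.
Variable G : H -> H.
Variables kap L : R.
Hypothesis kap_pos : 0 < kap.
Hypothesis kap_le_L : kap <= L.
Hypothesis lower_model : forall p q,
  phi p + hinner (hminus q p) (G p) + kap / 2 * sqnorm (hminus q p) <= phi q.
Hypothesis upper_model : forall p q,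
  phi q <= phi p + hinner (hminus q p) (G p) + L / 2 * sqnorm (hminus q p).
Variables P W : nat -> H.
Hypothesis P0 : P O = hzero.
Hypothesis W0 : W O = hzero.
Hypothesis P_step : forall k, P (S k) = hminus (W k) (hscal (1 / L) (G (W k))).
Hypothesis W_step : forall k, W (S k) =
  hplus (P (S k)) (hscal ((sqrt L - sqrt kap) / (sqrt L + sqrt kap)) (hminus (P (S k)) (P k))).

Lemma gradient_step_descent w :
  phi (hminus w (hscal (1 / L) (G w))) <= phi w - 1 / (2 * L) * sqnorm (G w).
Proof.
  pose proof (upper_model w (hminus w (hscal (1 / L) (G w)))) as U.
  replace (hminus (hminus w (hscal (1 / L) (G w))) w) with (hscal (- (1 / L)) (G w)) in U
    by (apply heq_of_inner; intro y; hexp; ring).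
  rewrite sqnorm_scal in U. unfold sqnorm in *. rewrite hinner_scal_l in U.
  replace (L / 2 * (- (1 / L) * - (1 / L) * hinner (G w) (G w))) with
    (1 / (2 * L) * hinner (G w) (G w)) in U by fld.
  replace (- (1 / L) * hinner (G w) (G w)) with (- (2 * (1 / (2 * L)) * hinner (G w) (G w))) in U
    by fld.
  lra.
Qed.

Definition fgm_rate : R := sqrt kap / sqrt L.

Lemma fgm_rate_bounds : 0 < fgm_rate <= 1.
Proof.
  assert (0 < sqrt kap) by (apply sqrt_lt_R0; lra). assert (0 < sqrt L) by (apply sqrt_lt_R0; lra).
  unfold fgm_rate. split; [apply Rdiv_lt_0_compat; lra|].
  apply Rmult_le_reg_r with (sqrt L); auto. unfold Rdiv. rewrite Rmult_assoc, Rinv_l by lra.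
  rewrite Rmult_1_r, Rmult_1_l. apply sqrt_le_1_alt; auto.
Qed.

Lemma fgm_step_size : 1 / L = fgm_rate * fgm_rate / kap.
Proof.
  assert (0 < sqrt kap) by (apply sqrt_lt_R0; lra). assert (0 < sqrt L) by (apply sqrt_lt_R0; lra).
  unfold fgm_rate. replace (sqrt kap / sqrt L * (sqrt kap / sqrt L))
    with ((sqrt kap * sqrt kap) / (sqrt L * sqrt L)) by fld.
  rewrite !sqrt_sqrt by lra. fld.
Qed.

Lemma fgm_momentum : (sqrt L - sqrt kap) / (sqrt L + sqrt kap) = (1 - fgm_rate) / (1 + fgm_rate).
Proof.
  assert (0 < sqrt kap) by (apply sqrt_lt_R0; lra). assert (0 < sqrt L) by (apply sqrt_lt_R0; lra).
  unfold fgm_rate. fld.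
Qed.

Definition estimate_point (k : nat) : H :=
  hscal (1 / fgm_rate) (hminus (hscal (1 + fgm_rate) (W k)) (P k)).

Lemma estimate_point_update k z :
  hminus (estimate_point (S k)) z =
  hplus (hscal (1 - fgm_rate) (hminus (estimate_point k) z))
        (hplus (hscal fgm_rate (hminus (W k) z)) (hscal (- (fgm_rate / kap)) (G (W k)))).
Proof.
  pose proof fgm_rate_bounds. apply heq_of_inner. intro y. unfold estimate_point.
  rewrite W_step, fgm_momentum, P_step, fgm_step_size.
  unfold hminus. repeat rewrite ?hinner_plus_l, ?hinner_scal_l, ?hinner_opp_l. fld.
Qed.

Lemma iterate_offset k :
  hminus (P k) (W k) = hscal fgm_rate (hminus (W k) (estimate_point k)).
Proof.
  pose proof fgm_rate_bounds. apply heq_of_inner. intro y. unfold estimate_point.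
  unfold hminus. repeat rewrite ?hinner_plus_l, ?hinner_scal_l, ?hinner_opp_l. fld.
Qed.

Definition fgm_potential (z : H) (k : nat) : R :=
  phi (P k) - phi z + kap / 2 * sqnorm (hminus (estimate_point k) z).

(** One step of the method: the descent of the gradient step, and the lower models at
    [w_k] towards [z] and towards [p_k], weighted by [q] and [1 - q]. *)
Lemma fgm_potential_contraction z k : fgm_potential z (S k) <= (1 - fgm_rate) * fgm_potential z k.
Proof.
  pose proof fgm_rate_bounds as [Hq0 Hq1]. pose proof fgm_step_size as Hstep.
  pose proof (gradient_step_descent (W k)) as U. rewrite <- P_step in U.
  pose proof (lower_model (W k) z) as Lz. pose proof (lower_model (W k) (P k)) as Lp.
  rewrite iterate_offset in Lp.
  set (q := fgm_rate) in *. set (w := W k) in *. set (g := G w) in *.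
  set (a := hminus (estimate_point k) z). set (b := hminus w z).
  replace (hminus z w) with (hscal (-1) b) in Lz
    by (apply heq_of_inner; intro y; unfold b; hexp; ring).
  replace (hminus w (estimate_point k)) with (hminus b a) in Lp
    by (apply heq_of_inner; intro y; unfold a, b; hexp; ring).
  pose proof (sqnorm_pos (hminus b a)) as Nba.
  unfold fgm_potential. rewrite estimate_point_update. fold a w g q b.
  hexp. hexp_in Lz. hexp_in Lp. hexp_in Nba. unfold sqnorm in U.
  rewrite (hinner_sym b a), (hinner_sym g a), (hinner_sym g b) in *.
  set (Naa := hinner a a) in *. set (Nbb := hinner b b) in *. set (Nab := hinner a b) in *.
  set (Nag := hinner a g) in *. set (Nbg := hinner b g) in *. set (Ngg := hinner g g) in *.
  (* the expanded [kap/2 |(1-q) a + q b - (q/kap) g|^2], where the [g]-term is the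
     descent [1/(2L) |g|^2] of the gradient step *)
  match goal with |- _ - _ + kap / 2 * ?X <= _ =>
    replace (kap / 2 * X) with
      (kap / 2 * ((1 - q) * Naa + q * Nbb - q * (1 - q) * (Naa - 2 * Nab + Nbb))
       - q * (1 - q) * Nag - q * q * Nbg + 1 / (2 * L) * Ngg)
      by (replace (1 / (2 * L)) with (1 / L / 2) by fld; rewrite Hstep; fld) end.
  assert (Lz' : phi w - Nbg + kap / 2 * Nbb <= phi z) by lra.
  assert (Lp' : phi w + q * (Nbg - Nag) <= phi (P k)).
  { assert (0 <= kap / 2 * (q * (q * (Nbb - 2 * Nab + Naa)))).
    { apply Rmult_le_pos; [lra|]. apply Rmult_le_pos; [lra|]. apply Rmult_le_pos; lra. }
    lra. }
  assert (M1 := Rmult_le_compat_l q _ _ (Rlt_le _ _ Hq0) Lz').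
  assert (M2 := Rmult_le_compat_l (1 - q) _ _ ltac:(lra) Lp').
  assert (0 <= kap / 2 * (q * (1 - q) * (Naa - 2 * Nab + Nbb))).
  { apply Rmult_le_pos; [lra|]. apply Rmult_le_pos; [apply Rmult_le_pos|]; lra. }
  lra.
Qed.

Lemma fgm_potential_init z : fgm_potential z O = phi hzero - phi z + kap / 2 * sqnorm z.
Proof.
  pose proof fgm_rate_bounds. unfold fgm_potential. rewrite P0. do 2 f_equal.
  replace (hminus (estimate_point 0) z) with (hscal (-1) z).
  - rewrite sqnorm_scal. ring.
  - apply heq_of_inner; intro y. unfold estimate_point. rewrite P0, W0.
    hexp. rewrite !hinner_zero_l. fld.
Qed.

Theorem fgm_value_bound z k :
  phi (P k) <= phi z + Rmax 0 (phi hzero - phi z + kap / 2 * sqnorm z).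
Proof.
  pose proof fgm_rate_bounds.
  assert (Ind : forall k, fgm_potential z k <= Rmax 0 (fgm_potential z O)).
  { induction k0; [apply Rmax_r|].
    pose proof (fgm_potential_contraction z k0). pose proof (Rmax_l 0 (fgm_potential z O)).
    destruct (Rle_or_lt 0 (fgm_potential z k0)); nra. }
  specialize (Ind k). rewrite fgm_potential_init in Ind. unfold fgm_potential in Ind.
  pose proof (sqnorm_pos (hminus (estimate_point k) z)). nra.
Qed.

End FastGradient.

Section BoundedOperator.
Context {H : Hilbert} {m : nat} (A : H -> RM m).
Variable nA : R.
Hypothesis HA_lin : linear_op A.
Hypothesis HnA : Rbar_sup (fun t => exists x : H, hnorm x <= 1 /\ t = rm_norm (A x)) = Finite nA.

Lemma A_scal a x : A (hscal a x) = rm_scal a (A x).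
Proof. apply HA_lin. Qed.

Lemma A_plus x y : A (hplus x y) = rm_plus (A x) (A y).
Proof. apply HA_lin. Qed.

Lemma A_zero : A hzero = rm_zero.
Proof.
  rewrite <- (hscal_zero hzero), A_scal.
  apply functional_extensionality; intro; unfold rm_scal, rm_zero; ring.
Qed.

Lemma A_minus x y : A (hminus x y) = rm_minus (A x) (A y).
Proof.
  unfold hminus. rewrite A_plus, hopp_scal, A_scal.
  apply functional_extensionality; intro; unfold rm_plus, rm_scal, rm_minus; ring.
Qed.

Lemma opnorm_nonneg : 0 <= nA.
Proof.
  assert (Hle : rm_norm (A hzero) <= nA).
  { apply (Rbar_sup_ub _ _ (rm_norm (A hzero)) HnA). exists hzero. split; auto.
    unfold hnorm. rewrite hinner_zero_l, sqrt_0. lra. }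
  rewrite A_zero in Hle. unfold rm_norm in Hle. rewrite rm_inner_zero_l, sqrt_0 in Hle. lra.
Qed.

(** [|A x| <= ||A|| |x|], by scaling [x] to the unit ball. *)
Lemma opnorm_bound x : rm_norm (A x) <= nA * hnorm x.
Proof.
  pose proof opnorm_nonneg. pose proof (hnorm_pos x).
  destruct (Req_dec (hnorm x) 0) as [E0|E0].
  - apply hnorm_zero_eq in E0. subst. rewrite A_zero. unfold rm_norm.
    rewrite rm_inner_zero_l, sqrt_0. nra.
  - assert (Hx1 : hnorm (hscal (1 / hnorm x) x) <= 1).
    { rewrite hnorm_scal, Rabs_right; [right; fld|]. apply Rle_ge, Rlt_le, Rdiv_lt_0_compat; lra. }
    pose proof (Rbar_sup_ub _ _ _ HnA (ex_intro _ _ (conj Hx1 eq_refl))) as Hb.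
    rewrite A_scal in Hb.
    change (rm_norm (rm_scal (1 / hnorm x) (A x)))
      with (hnorm (H := RMH m) (@hscal (RMH m) (1 / hnorm x) (A x))) in Hb.
    rewrite hnorm_scal, Rabs_right in Hb by (apply Rle_ge, Rlt_le, Rdiv_lt_0_compat; lra).
    apply Rmult_le_reg_l with (1 / hnorm x); [apply Rdiv_lt_0_compat; lra|].
    replace (1 / hnorm x * (nA * hnorm x)) with nA by fld. exact Hb.
Qed.

Lemma A_inner_strong_cv p (u : nat -> H) x :
  strong_cv u x -> Un_cv (fun n => rm_inner p (A (u n))) (rm_inner p (A x)).
Proof.
  intros Hu.
  assert (Hd : Un_cv (fun n => rm_inner p (A (hminus (u n) x))) 0).
  { intros e He. pose proof opnorm_nonneg. pose proof (rm_norm_pos m p).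
  destruct (Hu (e / (rm_norm p * nA + 1))) as [N HN]; [apply Rdiv_lt_0_compat; nra|].
  exists N. intros n Hn. specialize (HN n Hn). unfold Rdist. rewrite Rminus_0_r.
  change (rm_inner p (A (hminus (u n) x))) with (@hinner (RMH m) p (A (hminus (u n) x))).
  eapply Rle_lt_trans; [apply cauchy_schwarz|].
  pose proof (opnorm_bound (hminus (u n) x)). pose proof (hnorm_pos (hminus (u n) x)).
  change (hnorm (H := RMH m) p) with (rm_norm p).
  change (hnorm (H := RMH m) (A (hminus (u n) x))) with (rm_norm (A (hminus (u n) x))).
  apply Rle_lt_trans with ((rm_norm p * nA + 1) * hnorm (hminus (u n) x)); [nra|].
  apply Rmult_lt_reg_l with (/ (rm_norm p * nA + 1)); [apply Rinv_0_lt_compat; nra|].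
  rewrite <- Rmult_assoc, Rinv_l by nra. unfold Rdiv in HN. lra. }
  pose proof (CV_plus _ _ _ _ (CV_const (rm_inner p (A x))) Hd) as Hs. rewrite Rplus_0_r in Hs.
  eapply Un_cv_ext; [|exact Hs]. intro n. cbv beta. rewrite A_minus, rm_inner_minus_r. ring.
Qed.

(** A bounded operator into [R^m] maps weakly convergent sequences to norm convergent
    ones: each coordinate of [A] is a bounded functional, represented by Riesz. *)
Lemma A_weak_to_strong (u : nat -> H) x : weak_cv u x -> strong_cv (H := RMH m) (fun n => A (u n)) (A x).
Proof.
  intros Hw e He. apply (rm_cv_of_components m); [intro i|exact He].
  destruct (riesz_representation (fun y => A y i) nA) as [a Ha].
  - split; intros; [rewrite A_plus|rewrite A_scal]; reflexivity.
  - intro y. eapply Rle_trans; [apply (rm_comp_le m (A y) i)|apply opnorm_bound].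
  - rewrite (Ha x). apply (Un_cv_ext (fun n => hinner (u n) a)).
    + intro n. rewrite Ha, hinner_sym. reflexivity.
    + rewrite hinner_sym. apply Hw.
Qed.

End BoundedOperator.

Lemma young_inequality a b r : 0 < r -> a * b <= r / 2 * (b * b) + a * a / (2 * r).
Proof.
  intro Hr. assert (0 <= (r * b - a) * (r * b - a) / (2 * r)).
  { apply Rmult_le_pos; [apply Rle_0_sqr|left; apply Rinv_0_lt_compat; lra]. }
  replace ((r * b - a) * (r * b - a) / (2 * r)) with (r / 2 * (b * b) + a * a / (2 * r) - a * b) in H
    by fld. lra.
Qed.

(** The smoothed dual function [theta_rho]: its two parts are values of strongly convex
    minimization problems, attained at [x_{f,p}] and [x_{g,p}]. *)
Section DoubleSmoothing.
Context {H : Hilbert} {m : nat} (f : H -> Rbar) (g : RM m -> Rbar) (A : H -> RM m).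
Variable mu : R.
Hypothesis Hf_proper : properH f.
Hypothesis Hf_convex : convexH f.
Hypothesis Hf_lsc : lscH f.
Hypothesis Hmu : 0 < mu.
Hypothesis Hg_proper : properRM g.
Hypothesis Hg_lsc : lscRM g.
Hypothesis Hg_sc : strongly_convexRM mu g.
Hypothesis HA_lin : linear_op A.
Variable nA : R.
Hypothesis HnA : Rbar_sup (fun t => exists x : H, hnorm x <= 1 /\ t = rm_norm (A x)) = Finite nA.
Variable Df : R.
Hypothesis HDf : Rbar_sup (fun t => exists x, domH f x /\ t = 1 / 2 * (hnorm x) ^ 2) = Finite Df.

Lemma dom_f_finite x : domH f x -> f x = Finite (Rbar_fin (f x)).
Proof. intros [r Hr]. rewrite Hr. reflexivity. Qed.

Lemma dom_g_finite y : domRM g y -> g y = Finite (Rbar_fin (g y)).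
Proof. intros [r Hr]. rewrite Hr. reflexivity. Qed.

Lemma dom_f_bound x : domH f x -> sqnorm x <= 2 * Df.
Proof.
  intro Hx. pose proof (Rbar_sup_ub _ _ _ HDf (ex_intro _ x (conj Hx eq_refl))).
  rewrite hnorm_pow2 in H0. lra.
Qed.

Definition f_prox_obj (rho : R) (p : RM m) (x : H) : R :=
  Rbar_fin (f x) - rm_inner p (A x) + rho / 2 * sqnorm x.

Lemma f_prox_obj_strongly_convex rho p : 0 < rho -> strongly_convex_on (domH f) (f_prox_obj rho p) (rho / 2).
Proof.
  intros Hr x y t [fx Hx] [fy Hy] Ht.
  destruct (Rbar_le_finite_r _ _ (proj1 Hf_proper _) (Hf_convex x y fx fy t Hx Hy Ht)) as [fz [Hz Hfz]].
  split; [exists fz; auto|].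
  unfold f_prox_obj. rewrite Hx, Hy, Hz, (A_plus A HA_lin), !(A_scal A HA_lin), sqnorm_convex. simpl.
  rewrite rm_inner_plus_r, !rm_inner_scal_r. nra.
Qed.

Lemma f_prox_obj_closed rho p : 0 < rho -> closed_sublevels (domH f) (f_prox_obj rho p).
Proof.
  intros Hr u x a Hu Hx Ha.
  destruct (choice (fun n r => f (u n) = Finite r) Hu) as [r Hrn].
  destruct (lsc_limit_le f u x r (fun n => a + rm_inner p (A (u n)) - rho / 2 * sqnorm (u n))
              (a + rm_inner p (A x) - rho / 2 * sqnorm x) Hf_lsc (proj1 Hf_proper) Hx Hrn)
    as [rx [Hrx Hle]].
  - intro n. specialize (Ha n). unfold f_prox_obj in Ha. rewrite Hrn in Ha. simpl in Ha. lra.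
  - apply CV_minus; [apply CV_plus; [apply CV_const|apply (A_inner_strong_cv A nA HA_lin HnA); auto]|].
    apply (CV_mult (fun _ => rho / 2)); [apply CV_const|apply strong_cv_sqnorm; auto].
  - split; [exists rx; auto|]. unfold f_prox_obj. rewrite Hrx. simpl. lra.
Qed.

Lemma xf_spec rho p : 0 < rho ->
  domH f (xf f A rho p) /\ forall x, domH f x -> f_prox_obj rho p (xf f A rho p) <= f_prox_obj rho p x.
Proof.
  intro Hr.
  destruct (strongly_convex_min_exists (domH f) (f_prox_obj rho p) (rho / 2)) as [x [[fx Hx] Hmin]];
    [lra|apply f_prox_obj_strongly_convex; auto|apply f_prox_obj_closed; auto|apply (proj2 Hf_proper)|].
  assert (Ex : exists x, exists fx, f x = Finite fx /\ forall x' fx', f x' = Finite fx' ->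
      rm_inner p (A x') - fx' - rho / 2 * (hnorm x') ^ 2 <= rm_inner p (A x) - fx - rho / 2 * (hnorm x) ^ 2).
  { exists x, fx. split; auto. intros x' fx' Hx'. specialize (Hmin x' (ex_intro _ fx' Hx')).
    unfold f_prox_obj in Hmin. rewrite Hx, Hx' in Hmin. simpl in Hmin. rewrite !hnorm_pow2. lra. }
  destruct (epsilon_spec (inhabits hzero) _ Ex) as [fxs [Hfxs Hopt]]. fold (xf f A rho p) in Hfxs, Hopt.
  split; [exists fxs; auto|]. intros y [fy Hy]. specialize (Hopt y fy Hy).
  unfold f_prox_obj. rewrite Hy, Hfxs. simpl. rewrite !hnorm_pow2 in Hopt. lra.
Qed.

Lemma xf_growth rho p : 0 < rho -> forall x, domH f x ->
  f_prox_obj rho p (xf f A rho p) + rho / 2 * sqnorm (hminus x (xf f A rho p)) <= f_prox_obj rho p x.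
Proof.
  intros Hr. destruct (xf_spec rho p Hr) as [Hd Hopt].
  apply strongly_convex_min_growth; auto; [lra|apply f_prox_obj_strongly_convex; auto].
Qed.

Definition g_lin_obj (p : RM m) (y : RM m) : R := rm_inner p y + Rbar_fin (g y).

Lemma g_lin_obj_strongly_convex p : strongly_convex_on (H := RMH m) (domRM g) (g_lin_obj p) (mu / 2).
Proof.
  intros x y t [gx Hx] [gy Hy] Ht.
  destruct (Rbar_le_finite_r _ _ (proj1 Hg_proper _) (Hg_sc x y gx gy t Hx Hy Ht)) as [gz [Hz Hgz]].
  split; [exists gz; auto|].
  unfold g_lin_obj. change (@hplus (RMH m) (@hscal (RMH m) t x) (@hscal (RMH m) (1-t) y))
    with (rm_plus (rm_scal t x) (rm_scal (1 - t) y)).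
  rewrite Hz, Hx, Hy, rm_inner_plus_r, !rm_inner_scal_r. cbn [Rbar_fin].
  change (rm_norm (rm_minus x y)) with (hnorm (H := RMH m) (hminus (H := RMH m) x y)) in Hgz.
  rewrite hnorm_pow2 in Hgz. nra.
Qed.

Lemma g_lin_obj_closed p : closed_sublevels (H := RMH m) (domRM g) (g_lin_obj p).
Proof.
  intros u x a Hu Hx Ha.
  destruct (choice (fun n r => g (u n) = Finite r) Hu) as [r Hrn].
  destruct (lsc_limit_le (H := RMH m) g u x r (fun n => a - rm_inner p (u n)) (a - rm_inner p x)
              Hg_lsc (proj1 Hg_proper) Hx Hrn) as [rx [Hrx Hle]].
  - intro n. specialize (Ha n). unfold g_lin_obj in Ha. rewrite Hrn in Ha. simpl in Ha. lra.
  - apply CV_minus; [apply CV_const|].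
    apply (Un_cv_ext (fun n => @hinner (RMH m) (u n) p)); [intro; apply rm_inner_sym|].
    rewrite rm_inner_sym. apply (strong_cv_inner (H := RMH m)); auto.
  - split; [exists rx; auto|]. unfold g_lin_obj. rewrite Hrx. simpl. lra.
Qed.

Lemma xg_spec p : domRM g (xg g p) /\ forall y, domRM g y -> g_lin_obj p (xg g p) <= g_lin_obj p y.
Proof.
  destruct (strongly_convex_min_exists (H := RMH m) (domRM g) (g_lin_obj p) (mu / 2))
    as [y [[gy Hy] Hmin]];
    [lra|apply g_lin_obj_strongly_convex|apply g_lin_obj_closed|apply (proj2 Hg_proper)|].
  assert (Ex : exists y, exists gy, g y = Finite gy /\
    forall y' gy', g y' = Finite gy' -> rm_inner p y + gy <= rm_inner p y' + gy').
  { exists y, gy. split; auto. intros y' gy' Hy'. specialize (Hmin y' (ex_intro _ gy' Hy')).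
    unfold g_lin_obj in Hmin. rewrite Hy, Hy' in Hmin. simpl in Hmin. lra. }
  destruct (epsilon_spec (inhabits rm_zero) _ Ex) as [gys [Hgys Hopt]]. fold (xg g p) in Hgys, Hopt.
  split; [exists gys; auto|]. intros y' [gy' Hy']. specialize (Hopt y' gy' Hy').
  unfold g_lin_obj. rewrite Hy', Hgys. simpl. lra.
Qed.

Lemma xg_growth p : forall y, domRM g y ->
  g_lin_obj p (xg g p) + mu / 2 * rm_inner (rm_minus y (xg g p)) (rm_minus y (xg g p)) <= g_lin_obj p y.
Proof.
  destruct (xg_spec p) as [Hd Hopt].
  apply (strongly_convex_min_growth (H := RMH m)); auto; [lra|apply g_lin_obj_strongly_convex].
Qed.

(** The two parts of [theta_rho p = f_rho^*(A^* p) + g^*(-p)], as real numbers. *)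
Definition fconj_rho (rho : R) (p : RM m) : R := - f_prox_obj rho p (xf f A rho p).
Definition gconj (p : RM m) : R := - g_lin_obj p (xg g p).
Definition theta_rho (rho : R) (p : RM m) : R := fconj_rho rho p + gconj p.

Lemma fconj_rho_lower rho p q : 0 < rho ->
  fconj_rho rho p + rm_inner (rm_minus q p) (A (xf f A rho p)) <= fconj_rho rho q.
Proof.
  intro Hr. destruct (xf_spec rho p Hr) as [Hdp _]. destruct (xf_spec rho q Hr) as [_ Hq].
  specialize (Hq _ Hdp). unfold fconj_rho, f_prox_obj in *. rewrite rm_inner_minus_l. lra.
Qed.

Lemma fconj_rho_upper rho p q : 0 < rho ->
  fconj_rho rho q <= fconj_rho rho p + rm_inner (rm_minus q p) (A (xf f A rho p))
                     + nA ^ 2 / (2 * rho) * rm_inner (rm_minus q p) (rm_minus q p).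
Proof.
  intro Hr. set (xp := xf f A rho p). set (xq := xf f A rho q).
  pose proof (xf_growth rho p Hr xq (proj1 (xf_spec rho q Hr))) as Sf. fold xp in Sf.
  (* the cross term [<q - p, A (xq - xp)>] is absorbed by the growth at [xp] *)
  assert (C : rm_inner (rm_minus q p) (A (hminus xq xp)) <=
              rho / 2 * sqnorm (hminus xq xp) + nA ^ 2 / (2 * rho) * rm_inner (rm_minus q p) (rm_minus q p)).
  { eapply Rle_trans; [apply rm_cauchy_schwarz|].
    pose proof (opnorm_bound A nA HA_lin HnA (hminus xq xp)).
    pose proof (rm_norm_pos m (rm_minus q p)). pose proof (opnorm_nonneg A nA HA_lin HnA).
    eapply Rle_trans; [apply Rmult_le_compat_l; [auto|exact H0]|].
    replace (rm_norm (rm_minus q p) * (nA * hnorm (hminus xq xp)))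
      with ((nA * rm_norm (rm_minus q p)) * hnorm (hminus xq xp)) by ring.
    eapply Rle_trans; [apply (young_inequality _ _ rho Hr)|].
    rewrite hnorm_sq, <- rm_norm_sq. right. fld. }
  rewrite (A_minus A HA_lin), rm_inner_minus_r in C.
  unfold fconj_rho, f_prox_obj in *. fold xp xq. rewrite !rm_inner_minus_l in *. lra.
Qed.

Lemma gconj_lower p q : gconj p - rm_inner (rm_minus q p) (xg g p) <= gconj q.
Proof.
  destruct (xg_spec p) as [Hdp _]. destruct (xg_spec q) as [_ Hq].
  specialize (Hq _ Hdp). unfold gconj, g_lin_obj in *. rewrite rm_inner_minus_l. lra.
Qed.

Lemma gconj_upper p q :
  gconj q <= gconj p - rm_inner (rm_minus q p) (xg g p)
             + 1 / (2 * mu) * rm_inner (rm_minus q p) (rm_minus q p).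
Proof.
  set (yp := xg g p). set (yq := xg g q).
  pose proof (xg_growth p yq (proj1 (xg_spec q))) as Sg. fold yp in Sg.
  assert (C : rm_inner (rm_minus q p) (rm_minus yp yq) <=
              mu / 2 * rm_inner (rm_minus yq yp) (rm_minus yq yp)
              + 1 / (2 * mu) * rm_inner (rm_minus q p) (rm_minus q p)).
  { eapply Rle_trans; [apply rm_cauchy_schwarz|].
    replace (rm_norm (rm_minus yp yq)) with (rm_norm (rm_minus yq yp))
      by exact (hnorm_minus_sym (H := RMH m) yq yp).
    eapply Rle_trans; [apply (young_inequality _ _ mu Hmu)|]. rewrite !rm_norm_sq. right. fld. }
  rewrite rm_inner_minus_r in C.
  unfold gconj, g_lin_obj in *. fold yp yq. rewrite !rm_inner_minus_l in *. lra.
Qed.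

Lemma theta_rho_lower rho p q : 0 < rho ->
  theta_rho rho p + rm_inner (rm_minus q p) (grad_theta_rho f g A rho p) <= theta_rho rho q.
Proof.
  intro Hr. pose proof (fconj_rho_lower rho p q Hr). pose proof (gconj_lower p q).
  unfold theta_rho, grad_theta_rho. rewrite rm_inner_minus_r. lra.
Qed.

Lemma theta_rho_upper rho p q : 0 < rho ->
  theta_rho rho q <= theta_rho rho p + rm_inner (rm_minus q p) (grad_theta_rho f g A rho p)
    + (nA ^ 2 / rho + 1 / mu) / 2 * rm_inner (rm_minus q p) (rm_minus q p).
Proof.
  intro Hr. pose proof (fconj_rho_upper rho p q Hr). pose proof (gconj_upper p q).
  unfold theta_rho, grad_theta_rho. rewrite rm_inner_minus_r.
  replace ((nA ^ 2 / rho + 1 / mu) / 2) with (nA ^ 2 / (2 * rho) + 1 / (2 * mu)) by fld. lra.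
Qed.

Lemma theta_le_theta_rho rho p : 0 < rho -> Rbar_le (theta f g A p) (Finite (theta_rho rho p + rho * Df)).
Proof.
  intro Hr. unfold theta, theta_rho.
  replace (fconj_rho rho p + gconj p + rho * Df) with ((fconj_rho rho p + rho * Df) + gconj p) by ring.
  apply Rbar_plus_le; apply Rbar_sup_le.
  - intros t [x [fx [Hx ->]]]. destruct (xf_spec rho p Hr) as [_ Hq].
    specialize (Hq x (ex_intro _ fx Hx)). pose proof (dom_f_bound x (ex_intro _ fx Hx)).
    unfold fconj_rho, f_prox_obj in *. rewrite Hx in Hq. simpl in Hq. nra.
  - intros t [y [gy [Hy ->]]]. destruct (xg_spec p) as [_ Hq].
    specialize (Hq y (ex_intro _ gy Hy)). unfold gconj, g_lin_obj in *. rewrite Hy in Hq.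
    simpl in Hq. rewrite rm_inner_opp_l. lra.
Qed.

Lemma theta_rho_le_theta rho p : 0 < rho -> Rbar_le (Finite (theta_rho rho p)) (theta f g A p).
Proof.
  intro Hr. unfold theta, theta_rho. apply Rbar_plus_ge.
  - destruct (xf_spec rho p Hr) as [Hd _].
    apply Rbar_le_finite_trans with (rm_inner p (A (xf f A rho p)) - Rbar_fin (f (xf f A rho p))).
    + apply Rbar_sup_ge. exists (xf f A rho p), (Rbar_fin (f (xf f A rho p))).
      split; auto. apply dom_f_finite; auto.
    + unfold fconj_rho, f_prox_obj. pose proof (sqnorm_pos (xf f A rho p)). nra.
  - destruct (xg_spec p) as [Hd _]. apply Rbar_sup_ge.
    exists (xg g p), (Rbar_fin (g (xg g p))). split; [apply dom_g_finite; auto|].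
    unfold gconj, g_lin_obj. rewrite rm_inner_opp_l. ring.
Qed.

(** [f] is bounded below (it has a minimizer after adding a quadratic, and [dom f] is
    bounded). *)
Lemma f_bounded_below : exists fmin, forall x r, f x = Finite r -> fmin <= r.
Proof.
  destruct (strongly_convex_lower_bound (domH f) (f_prox_obj 2 rm_zero) 1) as [b Hb];
    [lra|replace 1 with (2 / 2) by field; apply f_prox_obj_strongly_convex; lra
    |apply f_prox_obj_closed; lra|apply (proj2 Hf_proper)|].
  exists (b - 2 * Df). intros x r Hx. specialize (Hb x (ex_intro _ r Hx)).
  unfold f_prox_obj in Hb. rewrite Hx, rm_inner_zero_l in Hb. simpl in Hb.
  pose proof (dom_f_bound x (ex_intro _ r Hx)). lra.
Qed.

Lemma theta_rho_zero_bounded : exists C0, forall rho, 0 < rho -> theta_rho rho rm_zero <= C0.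
Proof.
  destruct f_bounded_below as [fmin Hfmin].
  exists (- fmin + gconj rm_zero). intros rho Hr. unfold theta_rho, fconj_rho, f_prox_obj.
  rewrite rm_inner_zero_l. destruct (xf_spec rho rm_zero Hr) as [Hd _].
  pose proof (Hfmin _ _ (dom_f_finite _ Hd)). pose proof (sqnorm_pos (xf f A rho rm_zero)).
  assert (0 <= rho / 2 * sqnorm (xf f A rho rm_zero)) by (apply Rmult_le_pos; lra). lra.
Qed.

Lemma duality_gap_bound rho p x0 a0 b0 : 0 < rho -> f x0 = Finite a0 -> g (A x0) = Finite b0 ->
  Rbar_fin (f (xf f A rho p)) + Rbar_fin (g (xg g p)) <=
  a0 + b0 + rm_norm p * rm_norm (grad_theta_rho f g A rho p) + rho * Df.
Proof.
  intros Hr Ha0 Hb0.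
  destruct (xf_spec rho p Hr) as [_ Hx]. specialize (Hx x0 (ex_intro _ a0 Ha0)).
  destruct (xg_spec p) as [_ Hy]. specialize (Hy (A x0) (ex_intro _ b0 Hb0)).
  pose proof (rm_cauchy_schwarz m p (grad_theta_rho f g A rho p)) as Hcs.
  unfold grad_theta_rho in Hcs. rewrite rm_inner_minus_r in Hcs.
  pose proof (dom_f_bound x0 (ex_intro _ a0 Ha0)).
  pose proof (sqnorm_pos (xf f A rho p)).
  assert (rho / 2 * sqnorm x0 <= rho * Df) by (apply Rle_trans with (rho / 2 * (2 * Df)); [apply Rmult_le_compat_l; lra|lra]).
  assert (0 <= rho / 2 * sqnorm (xf f A rho p)) by (apply Rmult_le_pos; lra).
  unfold f_prox_obj, g_lin_obj, grad_theta_rho in *. rewrite Ha0, Hb0 in *. simpl in *. lra.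
Qed.

(** Sublevel sets of [f] are weakly sequentially closed (they are closed and convex). *)
Lemma f_sublevel_weak_closed (u : nat -> H) x c :
  (forall j, exists r, f (u j) = Finite r /\ r <= c) -> weak_cv u x ->
  exists r, f x = Finite r /\ r <= c.
Proof.
  intros Hu Hw. apply (convex_closed_weak_closed (fun y => exists r, f y = Finite r /\ r <= c) u x);
    auto.
  - intros y1 y2 t [r1 [Hr1 Hc1]] [r2 [Hr2 Hc2]] Ht.
    destruct (Rbar_le_finite_r _ _ (proj1 Hf_proper _) (Hf_convex y1 y2 r1 r2 t Hr1 Hr2 Ht))
      as [r [Hr Hle]].
    exists r. split; auto. nra.
  - intros v y Hv Hyv. destruct (choice (fun n r => f (v n) = Finite r /\ r <= c) Hv) as [r Hrn].
    exact (lsc_limit_le f v y r (fun _ => c) c Hf_lsc (proj1 Hf_proper) Hyv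
             (fun n => proj1 (Hrn n)) (fun n => proj2 (Hrn n)) (CV_const c)).
Qed.

Definition theta_rho_kap (rho kap : R) (p : RM m) : R := theta_rho rho p + kap / 2 * rm_inner p p.

Lemma rm_sqnorm_shift (p q : RM m) : rm_inner q q =
  rm_inner p p + 2 * rm_inner (rm_minus q p) p + rm_inner (rm_minus q p) (rm_minus q p).
Proof. rewrite !rm_inner_minus_l, !rm_inner_minus_r, (rm_inner_sym m p q). ring. Qed.

Lemma theta_rho_kap_lower rho kap p q : 0 < rho ->
  theta_rho_kap rho kap p + rm_inner (rm_minus q p) (rm_plus (grad_theta_rho f g A rho p) (rm_scal kap p))
  + kap / 2 * rm_inner (rm_minus q p) (rm_minus q p) <= theta_rho_kap rho kap q.
Proof.
  intro Hr. pose proof (theta_rho_lower rho p q Hr). unfold theta_rho_kap.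
  rewrite (rm_sqnorm_shift p q), rm_inner_plus_r, rm_inner_scal_r. nra.
Qed.

Lemma theta_rho_kap_upper rho kap p q : 0 < rho ->
  theta_rho_kap rho kap q <= theta_rho_kap rho kap p
  + rm_inner (rm_minus q p) (rm_plus (grad_theta_rho f g A rho p) (rm_scal kap p))
  + Lrk nA mu rho kap / 2 * rm_inner (rm_minus q p) (rm_minus q p).
Proof.
  intro Hr. pose proof (theta_rho_upper rho p q Hr). unfold theta_rho_kap, Lrk.
  rewrite (rm_sqnorm_shift p q), rm_inner_plus_r, rm_inner_scal_r.
  set (N := rm_inner (rm_minus q p) (rm_minus q p)) in *.
  replace ((nA ^ 2 / rho + 1 / mu + kap) / 2 * N) with
    ((nA ^ 2 / rho + 1 / mu) / 2 * N + kap / 2 * N) by (unfold Rdiv; ring). nra.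
Qed.

Lemma fgm_theta_bound rho kap z n : 0 < rho -> 0 < kap ->
  theta_rho_kap rho kap (fst (fgm f g A nA mu rho kap n)) <=
  theta_rho_kap rho kap z + Rmax 0 (theta_rho rho rm_zero - theta_rho rho z).
Proof.
  intros Hr Hk.
  assert (HkL : kap <= Lrk nA mu rho kap).
  { unfold Lrk. pose proof (pow2_ge_0 nA).
    assert (0 <= nA ^ 2 / rho) by (apply Rmult_le_pos; [auto|left; apply Rinv_0_lt_compat; auto]).
    assert (0 < 1 / mu) by (apply Rdiv_lt_0_compat; lra). lra. }
  refine (Rle_trans _ _ _ (fgm_value_bound (H := RMH m) (theta_rho_kap rho kap)
    (fun w => rm_plus (grad_theta_rho f g A rho w) (rm_scal kap w)) kap (Lrk nA mu rho kap) Hk HkL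
    (fun p q => theta_rho_kap_lower rho kap p q Hr) (fun p q => theta_rho_kap_upper rho kap p q Hr)
    (fun j => fst (fgm f g A nA mu rho kap j)) (fun j => snd (fgm f g A nA mu rho kap j))
    eq_refl eq_refl _ _ z n) _).
  - intro j. simpl. destruct (fgm f g A nA mu rho kap j). reflexivity.
  - intro j. simpl. destruct (fgm f g A nA mu rho kap j). reflexivity.
  - right. unfold theta_rho_kap, sqnorm. simpl. rewrite rm_inner_zero_l. do 2 f_equal. ring.
Qed.

Hypothesis Hf_bdd : bounded_domH f.
Hypothesis Hqual : exists x, domH f x /\ domRM g (A x).
Hypothesis HDf_pos : 0 < Df.
Variables (pstar : RM m) (Rad : R).
Hypothesis HRad : 0 < Rad.
Hypothesis Hpstar_opt : forall p, Rbar_le (theta f g A pstar) (theta f g A p).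
Hypothesis Hpstar_norm : rm_norm pstar <= Rad.
Variable eps : nat -> R.
Hypothesis Heps_pos : forall n, 0 < eps n.
Hypothesis Heps_cv : Un_cv eps 0.
Variable k : nat -> nat.

Definition rho_n (n : nat) : R := eps n / (3 * Df).
Definition kap_n (n : nat) : R := 2 * eps n / (3 * Rad ^ 2).
Definition p_n (n : nat) : RM m := fst (fgm f g A nA mu (rho_n n) (kap_n n) (k n)).
Definition xbar_n (n : nat) : H := xf f A (rho_n n) (p_n n).
Definition ybar_n (n : nat) : RM m := xg g (p_n n).

Hypothesis Hk_grad : forall n, rm_norm (grad_theta_rho f g A (rho_n n) (p_n n)) <= 2 * eps n / Rad.

Lemma rho_n_pos n : 0 < rho_n n.
Proof. unfold rho_n. apply Rdiv_lt_0_compat; [apply Heps_pos|lra]. Qed.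

Lemma kap_n_pos n : 0 < kap_n n.
Proof.
  unfold kap_n. pose proof (Heps_pos n). pose proof (pow_lt Rad 2 HRad).
  apply Rdiv_lt_0_compat; lra.
Qed.

Lemma dual_optimal_value : exists ts,
  (forall r p, 0 < r -> ts <= theta_rho r p + r * Df) /\ (forall r, 0 < r -> theta_rho r pstar <= ts).
Proof.
  assert (Hts : exists ts, theta f g A pstar = Finite ts).
  { pose proof (theta_rho_le_theta 1 pstar ltac:(lra)) as L1.
    pose proof (theta_le_theta_rho 1 rm_zero ltac:(lra)) as L2.
    pose proof (Hpstar_opt rm_zero) as L3.
    destruct (theta f g A pstar); simpl in *; [eauto| |contradiction].
    destruct (theta f g A rm_zero); simpl in *; contradiction. }
  destruct Hts as [ts Hts]. exists ts. split.
  - intros r p Hr. pose proof (Hpstar_opt p) as L3. rewrite Hts in L3.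
    pose proof (theta_le_theta_rho r p Hr) as L2.
    destruct (theta f g A p); simpl in *; try contradiction. lra.
  - intros r Hr. pose proof (theta_rho_le_theta r pstar Hr) as L1. rewrite Hts in L1. exact L1.
Qed.

(** The dual iterates grow at most like [eps n ^ (-1/2)]: compare the fast gradient
    method with the point [p*]. *)
Lemma dual_iterates_bounded : exists M0, 0 <= M0 /\
  forall n, rm_inner (p_n n) (p_n n) <= 3 * Rad ^ 2 * M0 / eps n + 2 * Rad ^ 2.
Proof.
  destruct dual_optimal_value as [ts [Hlow Hup]].
  destruct theta_rho_zero_bounded as [C0 HC0].
  exists (Rmax ts C0 - ts). split; [pose proof (Rmax_l ts C0); lra|]. intro n.
  pose proof (rho_n_pos n) as Hr. pose proof (kap_n_pos n) as Hk. pose proof (Heps_pos n).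
  pose proof (fgm_theta_bound (rho_n n) (kap_n n) pstar (k n) Hr Hk) as Hb.
  fold (p_n n) in Hb. unfold theta_rho_kap in Hb.
  pose proof (Hlow (rho_n n) (p_n n) Hr). pose proof (Hup (rho_n n) Hr). pose proof (HC0 (rho_n n) Hr).
  assert (HR2 : rm_inner pstar pstar <= Rad ^ 2).
  { rewrite <- rm_norm_sq. pose proof (rm_norm_pos m pstar). nra. }
  assert (Hmax : Rmax 0 (theta_rho (rho_n n) rm_zero - theta_rho (rho_n n) pstar)
                 <= Rmax ts C0 - theta_rho (rho_n n) pstar).
  { apply Rmax_lub; pose proof (Rmax_l ts C0); pose proof (Rmax_r ts C0); lra. }
  assert (Hc : kap_n n / 2 * rm_inner (p_n n) (p_n n) <=
               Rmax ts C0 - ts + kap_n n / 2 * Rad ^ 2 + eps n / 3).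
  { replace (eps n / 3) with (rho_n n * Df) by (unfold rho_n; fld).
    assert (kap_n n / 2 * rm_inner pstar pstar <= kap_n n / 2 * Rad ^ 2)
      by (apply Rmult_le_compat_l; lra).
    lra. }
  apply Rmult_le_reg_l with (kap_n n / 2); [lra|].
  replace (kap_n n / 2 * (3 * Rad ^ 2 * (Rmax ts C0 - ts) / eps n + 2 * Rad ^ 2))
    with (Rmax ts C0 - ts + kap_n n / 2 * Rad ^ 2 + eps n / 3)
    by (unfold kap_n; pose proof (pow_lt Rad 2 HRad); fld).
  exact Hc.
Qed.

Lemma small_gap_threshold M0 del : 0 <= M0 -> 0 < del -> exists e0, 0 < e0 /\
  forall e X, 0 < e < e0 -> 0 <= X -> X * X <= 12 * M0 * e + 8 * (e * e) -> X + e / 3 < del.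
Proof.
  intros HM Hdel.
  set (e0 := Rmin (3 * del / 2) (Rmin (del * del / (96 * M0 + 1)) (del / 8))).
  assert (Hb1 : e0 <= 3 * del / 2) by apply Rmin_l.
  assert (Hb2 : e0 <= del * del / (96 * M0 + 1))
    by (eapply Rle_trans; [apply Rmin_r|apply Rmin_l]).
  assert (Hb3 : e0 <= del / 8) by (eapply Rle_trans; [apply Rmin_r|apply Rmin_r]).
  exists e0. split.
  { unfold e0. apply Rmin_glb_lt; [lra|]. apply Rmin_glb_lt; [apply Rdiv_lt_0_compat; nra|lra]. }
  intros e X [He0 He] HX0 HX.
  assert (Q1 : 12 * M0 * e <= del * del / 8).
  { apply Rle_trans with (12 * M0 * (del * del / (96 * M0 + 1))); [apply Rmult_le_compat_l; lra|].
    apply Rmult_le_reg_r with (96 * M0 + 1); [lra|].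
    replace (12 * M0 * (del * del / (96 * M0 + 1)) * (96 * M0 + 1)) with (12 * M0 * (del * del)) by fld.
    nra. }
  assert (Q2 : 8 * (e * e) < del * del / 8) by nra.
  assert (X < del / 2) by nra. lra.
Qed.

Lemma primal_pairs_near_optimal x0 a0 b0 del : f x0 = Finite a0 -> g (A x0) = Finite b0 -> 0 < del ->
  exists N, forall n, (N <= n)%nat ->
    Rbar_fin (f (xbar_n n)) + Rbar_fin (g (ybar_n n)) <= a0 + b0 + del.
Proof.
  intros Ha0 Hb0 Hdel.
  destruct dual_iterates_bounded as [M0 [HM0 Hpn]].
  destruct (small_gap_threshold M0 del HM0 Hdel) as [e0 [He0 Hsmall]].
  destruct (Heps_cv e0 He0) as [N HN]. exists N. intros n Hn.
  specialize (HN n Hn). unfold Rdist in HN. pose proof (Heps_pos n) as Hen.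
  rewrite Rminus_0_r, Rabs_right in HN by lra.
  pose proof (duality_gap_bound (rho_n n) (p_n n) x0 a0 b0 (rho_n_pos n) Ha0 Hb0) as Hgap.
  replace (rho_n n * Df) with (eps n / 3) in Hgap by (unfold rho_n; fld).
  set (gr := grad_theta_rho f g A (rho_n n) (p_n n)) in *.
  set (X := rm_norm (p_n n) * rm_norm gr) in *.
  assert (HX0 : 0 <= X) by (apply Rmult_le_pos; apply rm_norm_pos).
  assert (HX : X * X <= 12 * M0 * eps n + 8 * (eps n * eps n)).
  { unfold X. replace (rm_norm (p_n n) * rm_norm gr * (rm_norm (p_n n) * rm_norm gr)) with
      ((rm_norm (p_n n) * rm_norm (p_n n)) * (rm_norm gr * rm_norm gr)) by ring.
    rewrite rm_norm_sq.
    pose proof (Hk_grad n) as Hg. fold gr in Hg. pose proof (rm_norm_pos m gr).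
    eapply Rle_trans.
    { apply Rmult_le_compat; [apply rm_inner_pos|apply Rmult_le_pos; apply rm_norm_pos|apply Hpn|].
      apply Rmult_le_compat; eauto. }
    right. fld. }
  specialize (Hsmall (eps n) X (conj Hen HN) HX0 HX). unfold xbar_n, ybar_n. lra.
Qed.

Lemma xbar_n_dom n : domH f (xbar_n n).
Proof. exact (proj1 (xf_spec (rho_n n) (p_n n) (rho_n_pos n))). Qed.

Lemma ybar_n_dom n : domRM g (ybar_n n).
Proof. exact (proj1 (xg_spec (p_n n))). Qed.

(** Along a weakly convergent subsequence of [xbar_n], the points [ybar_n] converge to
    [A x]: [A xbar_n - ybar_n] is the smoothed gradient, which vanishes. *)
Lemma ybar_n_strong_cv (ph : nat -> nat) x : strictly_increasing ph ->
  weak_cv (fun j => xbar_n (ph j)) x -> strong_cv (H := RMH m) (fun j => ybar_n (ph j)) (A x).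
Proof.
  intros Hph Hw. pose proof (A_weak_to_strong A nA HA_lin HnA _ x Hw) as HAx.
  pose proof (strictly_increasing_ge ph Hph) as Hphge.
  intros e He. destruct (HAx (e / 2)) as [N1 HN1]; [lra|].
  destruct (Heps_cv (e * Rad / 4)) as [N2 HN2]; [apply Rdiv_lt_0_compat; [apply Rmult_lt_0_compat|]; lra|].
  exists (N1 + N2)%nat. intros j Hj. specialize (HN1 j ltac:(lia)).
  specialize (HN2 (ph j) ltac:(specialize (Hphge j); lia)). unfold Rdist in HN2.
  rewrite Rminus_0_r, Rabs_right in HN2 by (pose proof (Heps_pos (ph j)); lra).
  set (yj := ybar_n (ph j)) in *. set (aj := A (xbar_n (ph j))) in *.
  replace (hminus (H := RMH m) yj (A x)) with
    (hplus (h := RMH m) (hminus (H := RMH m) yj aj) (hminus (H := RMH m) aj (A x)))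
    by (apply heq_of_inner; intro z; hexp; ring).
  eapply Rle_lt_trans; [apply hnorm_triangle|]. rewrite hnorm_minus_sym.
  pose proof (Hk_grad (ph j)) as Hg.
  change (rm_norm (grad_theta_rho f g A (rho_n (ph j)) (p_n (ph j))))
    with (hnorm (H := RMH m) (hminus (H := RMH m) aj yj)) in Hg.
  assert (2 * eps (ph j) / Rad < e / 2).
  { apply Rmult_lt_reg_r with Rad; auto. unfold Rdiv. rewrite Rmult_assoc, Rinv_l by lra. lra. }
  lra.
Qed.

(** A weak cluster point [x] is feasible, and [del]-optimal relative to any feasible
    [x0]: lower semicontinuity of [g] at [A x] and weak closedness of the sublevel sets
    of [f] pass the near-optimality of the primal pairs to the limit. *)
Lemma cluster_point_near_optimal (ph : nat -> nat) x x0 a0 b0 del :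
  strictly_increasing ph -> weak_cv (fun j => xbar_n (ph j)) x ->
  f x0 = Finite a0 -> g (A x0) = Finite b0 -> 0 < del ->
  exists fx gx, f x = Finite fx /\ g (A x) = Finite gx /\ fx + gx <= a0 + b0 + del.
Proof.
  intros Hph Hw Ha0 Hb0 Hdel.
  pose proof (strictly_increasing_ge ph Hph) as Hphge.
  pose proof (ybar_n_strong_cv ph x Hph Hw) as Hy.
  destruct (primal_pairs_near_optimal x0 a0 b0 (del / 2) Ha0 Hb0 ltac:(lra)) as [N1 HN1].
  destruct f_bounded_below as [fmin Hfmin].
  assert (Hev : forall c, Rbar_lt (Finite c) (g (A x)) -> exists N, forall j, (N <= j)%nat ->
             c < Rbar_fin (g (ybar_n (ph j))) /\ Rbar_fin (f (xbar_n (ph j))) + Rbar_fin (g (ybar_n (ph j))) <= a0 + b0 + del / 2).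
  { intros c Hc. destruct (Hg_lsc (A x) c Hc) as [d [Hd Hnb]]. destruct (Hy d Hd) as [N2 HN2].
    exists (N1 + N2)%nat. intros j Hj. pose proof (Hphge j). split; [|apply HN1; lia].
    specialize (Hnb _ (HN2 j ltac:(lia))). destruct (ybar_n_dom (ph j)) as [r Hr].
    rewrite Hr in Hnb |- *. exact Hnb. }
  destruct (g (A x)) as [gx| |] eqn:Eg.
  - destruct (Hev (gx - del / 2) ltac:(simpl; lra)) as [N HN].
    destruct (f_sublevel_weak_closed (fun j => xbar_n (ph (j + N)%nat)) x (a0 + b0 + del - gx)) as [fx [Hfx Hle]].
    + intro j. specialize (HN (j + N)%nat ltac:(lia)).
      exists (Rbar_fin (f (xbar_n (ph (j + N)%nat)))). split; [apply dom_f_finite, xbar_n_dom|lra].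
    + apply (weak_cv_shift (fun j => xbar_n (ph j))); exact Hw.
    + exists fx, gx. repeat split; auto. lra.
  - exfalso. destruct (Hev (a0 + b0 + del - fmin) I) as [N HN]. specialize (HN N (le_n N)).
    pose proof (Hfmin _ _ (dom_f_finite _ (xbar_n_dom (ph N)))). lra.
  - exfalso. exact (proj1 Hg_proper (A x) Eg).
Qed.

Theorem weak_cluster_point_exists :
  exists (ph : nat -> nat) (x : H), strictly_increasing ph /\ weak_cv (fun j => xbar_n (ph j)) x.
Proof.
  destruct Hf_bdd as [Mf HMf].
  apply (bounded_weak_subsequence xbar_n Mf). intro n. apply HMf, xbar_n_dom.
Qed.

Theorem weak_cluster_point_optimal (ph : nat -> nat) x :
  strictly_increasing ph -> weak_cv (fun j => xbar_n (ph j)) x ->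
  exists fx gy, f x = Finite fx /\ g (A x) = Finite gy /\ valP f g A = Finite (fx + gy).
Proof.
  intros Hph Hw. destruct Hqual as [x1 [[a1 Ha1] [b1 Hb1]]].
  destruct (cluster_point_near_optimal ph x x1 a1 b1 1 Hph Hw Ha1 Hb1 ltac:(lra))
    as [fx [gx [Hfx [Hgx _]]]].
  exists fx, gx. repeat split; auto.
  unfold valP. apply Rbar_inf_attained; [exists x, fx, gx; auto|].
  intros t [x0 [a0 [b0 [Ha0 [Hb0 ->]]]]]. apply Rnot_lt_le. intro Hlt.
  destruct (cluster_point_near_optimal ph x x0 a0 b0 ((fx + gx - (a0 + b0)) / 2) Hph Hw Ha0 Hb0 ltac:(lra))
    as [fx' [gx' [Hf' [Hg' Hle]]]].
  rewrite Hfx in Hf'. rewrite Hgx in Hg'. inversion Hf'; inversion Hg'; subst. lra.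
Qed.

End DoubleSmoothing.

Theorem mainTheorem7
  (H : Hilbert) (m : nat) (f : H -> Rbar) (g : RM m -> Rbar) (A : H -> RM m)
  (mu : R)
  (Hf_proper : properH f) (Hf_convex : convexH f) (Hf_lsc : lscH f)
  (Hf_bdd : bounded_domH f)
  (Hmu : 0 < mu)
  (Hg_proper : properRM g) (Hg_lsc : lscRM g) (Hg_sc : strongly_convexRM mu g)
  (HA_lin : linear_op A) (HA_cont : continuous_op A)
  (Hqual : exists x, domH f x /\ domRM g (A x))
  (* nA = ||A|| (operator norm) *)
  (nA : R)
  (HnA : Rbar_sup (fun t => exists x : H, hnorm x <= 1 /\ t = rm_norm (A x)) = Finite nA)
  (* Df = sup { ||x||^2 / 2 : x in dom f } *)
  (Df : R)
  (HDf : Rbar_sup (fun t => exists x, domH f x /\ t = 1 / 2 * (hnorm x) ^ 2) = Finite Df)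
  (HDf_pos : 0 < Df)
  (* p* optimal for (D), with ||p*|| <= Rad *)
  (pstar : RM m) (Rad : R) (HRad : 0 < Rad)
  (Hpstar_opt : forall p, Rbar_le (theta f g A pstar) (theta f g A p))
  (Hpstar_norm : rm_norm pstar <= Rad)
  (* the tolerances *)
  (eps : nat -> R) (Heps_pos : forall n, 0 < eps n)
  (Heps_dec : Un_decreasing eps) (Heps_cv : Un_cv eps 0)
  (* the iteration indices k(eps_n) *)
  (k : nat -> nat)
  (Hk_val : forall n,
     Rbar_le
       (theta f g A (fst (fgm f g A nA mu (eps n / (3 * Df)) (2 * eps n / (3 * Rad ^ 2)) (k n))))
       (Rbar_plus (theta f g A pstar) (Finite (eps n))))
  (Hk_grad : forall n,
     rm_norm (grad_theta_rho f g A (eps n / (3 * Df))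
       (fst (fgm f g A nA mu (eps n / (3 * Df)) (2 * eps n / (3 * Rad ^ 2)) (k n))))
     <= 2 * eps n / Rad) :
  let xbar := fun n =>
    xf f A (eps n / (3 * Df))
      (fst (fgm f g A nA mu (eps n / (3 * Df)) (2 * eps n / (3 * Rad ^ 2)) (k n))) in
  (exists (phi : nat -> nat) (x : H),
     (forall j, (phi j < phi (S j))%nat) /\ weak_cv (fun j => xbar (phi j)) x) /\
  (forall x : H,
     (exists phi : nat -> nat,
        (forall j, (phi j < phi (S j))%nat) /\ weak_cv (fun j => xbar (phi j)) x) ->
     exists fx gy, f x = Finite fx /\ g (A x) = Finite gy /\
       valP f g A = Finite (fx + gy)).
Proof.
  intros xbar. split.
  - eapply weak_cluster_point_exists with (Df := Df) (eps := eps) (k := k); eassumption.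
  - intros x [ph [Hph Hw]].
    eapply weak_cluster_point_optimal
      with (mu := mu) (nA := nA) (Df := Df) (pstar := pstar) (Rad := Rad) (eps := eps) (k := k)
           (ph := ph); eassumption.
Qed.
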